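(* Let $H$ be a non-total attractor hull of a $k$-oriented Spherical Diagram $\mathcal D$, and let $x$ be a point of intersection between an arc of $\mathcal D$ and the interior of $H$. Then there are three distinct arcs of $\mathcal D$ that thrust the boundary of $H$ at three distinct points, not all lying on the same edge of $H$, each of which is internally $H$-connected (with respect to $\mathcal D$) with $x$.
   Context: A geodesic arc on the unit sphere in $\mathbb R^3$ is the unique shortest curve joining two non-antipodal points. An arc $a$ blocks an arc $b$ (equivalently, $b$ hits $a$) if an endpoint of $b$ lies in the relative interior of $a$. A Spherical Diagram (SD) is a finite non-empty collection $\mathcal D$ of pairwise interior-disjoint geodesic arcs on the unit sphere such that each arc of $\mathcal D$ is blocked by arcs of $\mathcal D$ at each of its endpoints. An SD $\mathcal D$ is $k$-oriented if there exist a set $P$ of $k$ points on the unit sphere (poles), no two antipodal, and a function $f\colon\mathcal D\to P$ such that each arc $a\in\mathcal D$ lies on a great circle through $f(a)$ but contains neither $f(a)$ nor its antipode $-f(a)$ (the anti-pole of $f(a)$). An attractor of a $k$-oriented SD is a set of $k$ points, no two antipodal, chosen among its poles and anti-poles. An attractor hull is the spherical convex hull of an attractor; it is total if it is the whole sphere (otherwise it is a spherical polygon contained in the interior of a hemisphere). For a spherical polygon $R$ contained in the interior of a hemisphere, an arc $a$ thrusts the boundary of $R$ at a point $y$ if $y\in a\cap\partial R$ and $a$ also intersects the interior of $R$. For a region $R$, two points are internally $R$-connected (with respect to $\mathcal D$) if there is a path between them contained in the union of the arcs of $\mathcal D$, all of whose points except possibly its endpoints lie in the interior of $R$. *)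

From Stdlib Require Import Reals Lra List.
Open Scope R_scope.

Record pt := mkpt { px : R; py : R; pz : R }.

Definition padd (p q : pt) : pt := mkpt (px p + px q) (py p + py q) (pz p + pz q).
Definition pscale (t : R) (p : pt) : pt := mkpt (t * px p) (t * py p) (t * pz p).
Definition popp (p : pt) : pt := pscale (-1) p.
Definition pzero : pt := mkpt 0 0 0.
Definition dot (p q : pt) : R := px p * px q + py p * py q + pz p * pz q.
Definition dist (p q : pt) : R :=
  sqrt ((px p - px q)^2 + (py p - py q)^2 + (pz p - pz q)^2).

Definition on_sphere (p : pt) : Prop := dot p p = 1.

(* An arc is given by its two endpoints; it is the shortest curve joining
   them, i.e. the set of unit vectors a*u + b*v with a, b >= 0. *)
Record arc := mkarc { asrc : pt; adst : pt }.

Definition arc_wf (a : arc) : Prop :=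
  on_sphere (asrc a) /\ on_sphere (adst a) /\
  asrc a <> adst a /\ asrc a <> popp (adst a).

Definition on_arc (a : arc) (p : pt) : Prop :=
  on_sphere p /\ exists s t, 0 <= s /\ 0 <= t /\
    p = padd (pscale s (asrc a)) (pscale t (adst a)).

Definition in_relint (a : arc) (p : pt) : Prop :=
  on_sphere p /\ exists s t, 0 < s /\ 0 < t /\
    p = padd (pscale s (asrc a)) (pscale t (adst a)).

Definition is_endpoint (b : arc) (e : pt) : Prop := e = asrc b \/ e = adst b.

Definition SD (D : list arc) : Prop :=
  D <> nil /\
  (forall a, In a D -> arc_wf a) /\
  (forall a b p, In a D -> In b D -> a <> b -> in_relint a p -> ~ in_relint b p) /\
  (forall b e, In b D -> is_endpoint b e -> exists a, In a D /\ in_relint a e).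

Definition antipodal (p q : pt) : Prop := q = popp p.

Definition cross (p q : pt) : pt :=
  mkpt (py p * pz q - pz p * py q) (pz p * px q - px p * pz q)
       (px p * py q - py p * px q).
Definition on_great_circle_of (a : arc) (p : pt) : Prop :=
  dot (cross (asrc a) (adst a)) p = 0.

Definition oriented (D : list arc) (k : nat) (P : list pt) (f : arc -> pt) : Prop :=
  length P = k /\ NoDup P /\
  (forall p, In p P -> on_sphere p) /\
  (forall p q, In p P -> In q P -> ~ antipodal p q) /\
  (forall a, In a D ->
     In (f a) P /\ on_great_circle_of a (f a) /\
     ~ on_arc a (f a) /\ ~ on_arc a (popp (f a))).

Definition attractor (k : nat) (P : list pt) (A : list pt) : Prop :=
  length A = k /\ NoDup A /\
  (forall x, In x A -> In x P \/ In (popp x) P) /\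
  (forall p q, In p A -> In q A -> ~ antipodal p q).

Fixpoint in_cone (A : list pt) (p : pt) : Prop :=
  match A with
  | nil => p = pzero
  | a :: A' => exists t q, 0 <= t /\ in_cone A' q /\ p = padd (pscale t a) q
  end.

Definition sph_hull (A : list pt) (p : pt) : Prop := on_sphere p /\ in_cone A p.

Definition total (H : pt -> Prop) : Prop := forall p, on_sphere p -> H p.

Definition in_open_hemisphere (H : pt -> Prop) : Prop :=
  exists c, forall p, H p -> dot c p > 0.

Definition sph_interior (H : pt -> Prop) (p : pt) : Prop :=
  on_sphere p /\ exists eps, eps > 0 /\
    forall q, on_sphere q -> dist p q < eps -> H q.

Definition sph_boundary (H : pt -> Prop) (p : pt) : Prop :=
  on_sphere p /\ forall eps, eps > 0 ->
    (exists q, on_sphere q /\ dist p q < eps /\ H q) /\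
    (exists q, on_sphere q /\ dist p q < eps /\ ~ H q).

(* edges of a spherical polygon H: intersections of H with a supporting
   great circle {p | n.p = 0} (H on the side n.p >= 0) that contain at
   least two points *)
Definition edge_normal (H : pt -> Prop) (n : pt) : Prop :=
  n <> pzero /\ (forall q, H q -> dot n q >= 0) /\
  exists q1 q2, q1 <> q2 /\ H q1 /\ H q2 /\ dot n q1 = 0 /\ dot n q2 = 0.

Definition on_edge (H : pt -> Prop) (n : pt) (p : pt) : Prop := H p /\ dot n p = 0.

Definition thrusts (a : arc) (H : pt -> Prop) (y : pt) : Prop :=
  on_arc a y /\ sph_boundary H y /\ exists z, on_arc a z /\ sph_interior H z.

Definition path_continuous (g : R -> pt) : Prop :=
  forall t, 0 <= t <= 1 -> forall eps, eps > 0 -> exists delta, delta > 0 /\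
    forall s, 0 <= s <= 1 -> Rabs (s - t) < delta -> dist (g s) (g t) < eps.

Definition int_connected (D : list arc) (H : pt -> Prop) (x y : pt) : Prop :=
  exists g : R -> pt, path_continuous g /\ g 0 = x /\ g 1 = y /\
    (forall t, 0 <= t <= 1 -> exists a, In a D /\ on_arc a (g t)) /\
    (forall t, 0 < t < 1 -> sph_interior H (g t)).

(* Fix [c] with [c.p > 0] on the hull [H].  In the central projection onto the plane [c.z = 1]
   arcs become segments and linear functionals stay linear, so from an interior point of the
   diagram one can walk along arcs, strictly increasing a functional [n] (ties broken by a
   generic second functional): if the current arc leaves [H] it thrusts the boundary, and if it
   ends inside [H] its endpoint is blocked by another arc, along which the walk continues.  The
   number of arcs still having interior points above the current point drops at each step, so
   the walk ends at a thrust point reached from [x] inside [H].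
   Walking with [n = 0] gives [y1]; with [n] vanishing at [x] and negative at [y1] gives
   [y2 <> y1]; after moving [x] along the diagram off the plane through [y1], [y2], walking with
   [n] normal to that plane gives [y3] off it, so no edge contains all three points.
   The attractor point among the pole and anti-pole of an arc lies on its great circle but off
   the arc, which forces every arc meeting the interior of [H] to have an interior endpoint;
   hence no arc thrusts [H] at two points, and the three arcs are distinct. *)

From Stdlib Require Import Reals List Lra Lia Psatz Classical ClassicalEpsilon.
Open Scope R_scope.

(** * Vectors *)

Lemma pt_eq (p q : pt) : px p = px q -> py p = py q -> pz p = pz q -> p = q.
Proof. destruct p, q; simpl; intros; subst; reflexivity. Qed.

Definition psub (p q : pt) : pt := mkpt (px p - px q) (py p - py q) (pz p - pz q).
Definition lincomb (a : R) (p : pt) (b : R) (q : pt) : pt := padd (pscale a p) (pscale b q).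
Definition pnorm (v : pt) : R := sqrt (dot v v).
Definition normalize (v : pt) : pt := pscale (/ pnorm v) v.

Ltac pt_unfold := unfold lincomb, dot, padd, pscale, popp, psub, cross, pzero in *; simpl in *.
Ltac pt_ring := apply pt_eq; pt_unfold; ring.
Ltac pt_field := apply pt_eq; pt_unfold; field.

Lemma dot_comm (a b : pt) : dot a b = dot b a.
Proof. destruct a, b; pt_unfold; ring. Qed.
Lemma dot_addl (a b c : pt) : dot (padd a b) c = dot a c + dot b c.
Proof. destruct a, b, c; pt_unfold; ring. Qed.
Lemma dot_addr (a b c : pt) : dot c (padd a b) = dot c a + dot c b.
Proof. destruct a, b, c; pt_unfold; ring. Qed.
Lemma dot_scalel (t : R) (a b : pt) : dot (pscale t a) b = t * dot a b.
Proof. destruct a, b; pt_unfold; ring. Qed.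
Lemma dot_scaler (t : R) (a b : pt) : dot a (pscale t b) = t * dot a b.
Proof. destruct a, b; pt_unfold; ring. Qed.
Lemma dot_subl (a b c : pt) : dot (psub a b) c = dot a c - dot b c.
Proof. destruct a, b, c; pt_unfold; ring. Qed.
Lemma dot_subr (a b c : pt) : dot c (psub a b) = dot c a - dot c b.
Proof. destruct a, b, c; pt_unfold; ring. Qed.
Lemma dot_zerol (a : pt) : dot pzero a = 0.
Proof. destruct a; pt_unfold; ring. Qed.
Lemma dot_oppl (a b : pt) : dot (popp a) b = - dot a b.
Proof. destruct a, b; pt_unfold; ring. Qed.
Lemma dot_oppr (a b : pt) : dot a (popp b) = - dot a b.
Proof. destruct a, b; pt_unfold; ring. Qed.
Lemma dot_lincombr (a b : R) (p q n : pt) :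
  dot n (lincomb a p b q) = a * dot n p + b * dot n q.
Proof. destruct p, q, n; pt_unfold; ring. Qed.

Lemma dot_self_ge0 (v : pt) : 0 <= dot v v.
Proof. destruct v; pt_unfold; nra. Qed.

Lemma dot_self_eq0 (v : pt) : dot v v = 0 -> v = pzero.
Proof. destruct v; pt_unfold; intros; apply pt_eq; simpl; nra. Qed.

Lemma dot_self_pos (v : pt) : v <> pzero -> 0 < dot v v.
Proof.
  intros Hv. destruct (Rle_lt_or_eq_dec _ _ (dot_self_ge0 v)) as [|E]; auto.
  exfalso; apply Hv, dot_self_eq0; auto.
Qed.

Lemma dot_self_pos_neq0 (v : pt) : 0 < dot v v -> v <> pzero.
Proof. intros Hv ->. rewrite dot_zerol in Hv. lra. Qed.

Lemma dot_cross_cross (u v : pt) :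
  dot (cross u v) (cross u v) = dot u u * dot v v - dot u v * dot u v.
Proof. destruct u, v; pt_unfold; ring. Qed.

Lemma dot_cross_l (p q : pt) : dot (cross p q) p = 0.
Proof. destruct p, q; pt_unfold; ring. Qed.

Lemma dot_cross_r (p q : pt) : dot (cross p q) q = 0.
Proof. destruct p, q; pt_unfold; ring. Qed.

Lemma dot_cauchy_schwarz (a b : pt) : dot a b * dot a b <= dot a a * dot b b.
Proof. pose proof (dot_cross_cross a b). pose proof (dot_self_ge0 (cross a b)). lra. Qed.

Lemma pnorm_ge0 (v : pt) : 0 <= pnorm v.
Proof. apply sqrt_pos. Qed.
Lemma pnorm_sqr (v : pt) : pnorm v * pnorm v = dot v v.
Proof. apply sqrt_sqrt, dot_self_ge0. Qed.
Lemma pnorm_pos (v : pt) : 0 < dot v v -> 0 < pnorm v.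
Proof. apply sqrt_lt_R0. Qed.
Lemma pnorm_unit (v : pt) : on_sphere v -> pnorm v = 1.
Proof. unfold pnorm, on_sphere; intros ->; apply sqrt_1. Qed.

Lemma le_of_sqr_le (x y : R) : 0 <= y -> x * x <= y * y -> x <= y.
Proof. intros; apply Rsqr_incr_0_var; unfold Rsqr; auto. Qed.

Lemma dot_le_pnorm (a b : pt) : dot a b <= pnorm a * pnorm b.
Proof.
  pose proof (pnorm_ge0 a); pose proof (pnorm_ge0 b).
  apply le_of_sqr_le; [nra|].
  replace (pnorm a * pnorm b * (pnorm a * pnorm b)) with
    ((pnorm a * pnorm a) * (pnorm b * pnorm b)) by ring.
  rewrite !pnorm_sqr; apply dot_cauchy_schwarz.
Qed.

Lemma pnorm_triangle (a b : pt) : pnorm (padd a b) <= pnorm a + pnorm b.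
Proof.
  pose proof (pnorm_ge0 a); pose proof (pnorm_ge0 b); pose proof (dot_le_pnorm a b).
  apply le_of_sqr_le; [lra|].
  rewrite pnorm_sqr, dot_addl, !dot_addr, (dot_comm b a), <- (pnorm_sqr a), <- (pnorm_sqr b).
  nra.
Qed.

Lemma pnorm_scale (t : R) (v : pt) : pnorm (pscale t v) = Rabs t * pnorm v.
Proof.
  apply Rsqr_inj; [apply pnorm_ge0 | pose proof (Rabs_pos t); pose proof (pnorm_ge0 v); nra|].
  unfold Rsqr. rewrite pnorm_sqr, dot_scalel, dot_scaler.
  replace (Rabs t * pnorm v * (Rabs t * pnorm v)) with ((Rabs t * Rabs t) * (pnorm v * pnorm v))
    by ring.
  rewrite pnorm_sqr, <- Rabs_mult, Rabs_right; [ring | nra].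
Qed.

Lemma pnorm_opp (v : pt) : pnorm (popp v) = pnorm v.
Proof.
  unfold popp; rewrite pnorm_scale.
  replace (Rabs (-1)) with 1 by (rewrite Rabs_left; lra). ring.
Qed.

Lemma pnorm_sub_ge (a b : pt) : pnorm a - pnorm b <= pnorm (psub a b).
Proof.
  replace a with (padd (psub a b) b) at 1 by pt_ring.
  pose proof (pnorm_triangle (psub a b) b); lra.
Qed.

Lemma dist_pnorm (p q : pt) : dist p q = pnorm (psub p q).
Proof. destruct p, q; unfold dist, pnorm; pt_unfold; f_equal; ring. Qed.

Lemma dist_ge0 (p q : pt) : 0 <= dist p q.
Proof. rewrite dist_pnorm; apply pnorm_ge0. Qed.

Lemma dist_comm (p q : pt) : dist p q = dist q p.
Proof. destruct p, q; unfold dist; f_equal; simpl; ring. Qed.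

Lemma dist_triangle (p q r : pt) : dist p r <= dist p q + dist q r.
Proof.
  rewrite !dist_pnorm. replace (psub p r) with (padd (psub p q) (psub q r)) by pt_ring.
  apply pnorm_triangle.
Qed.

Lemma dist_refl (p : pt) : dist p p = 0.
Proof.
  rewrite dist_pnorm; unfold pnorm; pt_unfold.
  replace (_ + _ + _) with 0 by ring; apply sqrt_0.
Qed.

Lemma dist_eq0 (p q : pt) : dist p q = 0 -> p = q.
Proof.
  rewrite dist_pnorm; unfold pnorm; intros H.
  apply sqrt_eq_0, dot_self_eq0 in H; [|apply dot_self_ge0].
  destruct p, q; pt_unfold; injection H; intros; apply pt_eq; simpl; lra.
Qed.

Lemma dot_sub_le (c y w : pt) : dot c w - dot c y <= pnorm c * dist y w.
Proof.
  rewrite dist_comm, dist_pnorm, <- dot_subr. apply dot_le_pnorm.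
Qed.

Lemma sphere_normalize (v : pt) : 0 < dot v v -> on_sphere (normalize v).
Proof.
  intros Hv. unfold on_sphere, normalize. rewrite dot_scalel, dot_scaler, <- pnorm_sqr.
  pose proof (pnorm_pos v Hv). field. lra.
Qed.

Lemma normalize_unit (v : pt) : on_sphere v -> normalize v = v.
Proof. intros Hv. unfold normalize. rewrite pnorm_unit, Rinv_1 by auto. pt_ring. Qed.

Lemma normalize_scale (t : R) (v : pt) :
  0 < t -> 0 < dot v v -> normalize (pscale t v) = normalize v.
Proof.
  intros Ht Hv. unfold normalize. rewrite pnorm_scale, Rabs_right by lra.
  pose proof (pnorm_pos v Hv). pt_field; lra.
Qed.

Lemma normalize_lipschitz (u w : pt) : 0 < dot u u -> 0 < dot w w ->
  pnorm (psub (normalize u) (normalize w)) <= 2 * pnorm (psub u w) / pnorm w.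
Proof.
  intros Hu Hw. pose proof (pnorm_pos u Hu) as Nu. pose proof (pnorm_pos w Hw) as Nw.
  replace (psub (normalize u) (normalize w)) with
    (lincomb (/ pnorm w) (psub u w) ((pnorm w - pnorm u) / (pnorm u * pnorm w)) u)
    by (unfold normalize; pt_field; lra).
  eapply Rle_trans; [apply pnorm_triangle|]. rewrite !pnorm_scale.
  rewrite Rabs_right by (apply Rle_ge, Rlt_le, Rinv_0_lt_compat; lra).
  unfold Rdiv. rewrite Rabs_mult, (Rabs_right (/ _)) by (apply Rle_ge, Rlt_le, Rinv_0_lt_compat; nra).
  assert (Rabs (pnorm w - pnorm u) <= pnorm (psub u w)).
  { apply Rabs_le. pose proof (pnorm_sub_ge u w). pose proof (pnorm_sub_ge w u).
    replace (psub w u) with (popp (psub u w)) in * by pt_ring. rewrite pnorm_opp in *. lra. }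
  replace (Rabs (pnorm w - pnorm u) * / (pnorm u * pnorm w) * pnorm u)
    with (Rabs (pnorm w - pnorm u) * / pnorm w) by (field; lra).
  assert (0 < / pnorm w) by (apply Rinv_0_lt_compat; lra).
  nra.
Qed.

Lemma popp_involutive (p : pt) : popp (popp p) = p.
Proof. pt_ring. Qed.

Lemma sphere_popp (p : pt) : on_sphere p -> on_sphere (popp p).
Proof. unfold on_sphere; intros Hp; rewrite dot_oppl, dot_oppr, Hp; ring. Qed.

Lemma unit_dot_bounds (u v : pt) : on_sphere u -> on_sphere v -> -1 <= dot u v <= 1.
Proof.
  unfold on_sphere; intros Hu Hv. pose proof (dot_cauchy_schwarz u v) as H.
  rewrite Hu, Hv in H. split; nra.
Qed.

Lemma unit_dot_eq1 (u v : pt) : on_sphere u -> on_sphere v -> dot u v = 1 -> u = v.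
Proof.
  unfold on_sphere; intros Hu Hv H. apply dist_eq0. rewrite dist_pnorm. unfold pnorm.
  rewrite !dot_subl, !dot_subr, (dot_comm v u), Hu, Hv, H.
  replace (1 - 1 - (1 - 1)) with 0 by ring. apply sqrt_0.
Qed.

Lemma unit_dot_eqm1 (u v : pt) : on_sphere u -> on_sphere v -> dot u v = -1 -> u = popp v.
Proof.
  intros Hu Hv H. apply unit_dot_eq1; auto using sphere_popp. rewrite dot_oppr, H; ring.
Qed.

Lemma unit_dot_gtm1 (u v : pt) : on_sphere u -> on_sphere v -> u <> popp v -> -1 < dot u v.
Proof.
  intros Hu Hv Huv. destruct (unit_dot_bounds u v Hu Hv) as [[|E] _]; auto.
  exfalso; apply Huv, unit_dot_eqm1; auto.
Qed.

Lemma unit_dot_lt1 (u v : pt) : on_sphere u -> on_sphere v -> u <> v -> dot u v < 1.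
Proof.
  intros Hu Hv Huv. destruct (unit_dot_bounds u v Hu Hv) as [_ [|E]]; auto.
  exfalso; apply Huv, unit_dot_eq1; auto.
Qed.

Lemma unit_scale_eq1 (t : R) (v : pt) :
  0 <= t -> on_sphere v -> on_sphere (pscale t v) -> t = 1.
Proof. unfold on_sphere; rewrite dot_scalel, dot_scaler; intros Ht -> H; nra. Qed.

Lemma sphere_neq0 (p : pt) : on_sphere p -> p <> pzero.
Proof. unfold on_sphere; intros Hp ->; rewrite dot_zerol in Hp; lra. Qed.

Lemma cross_unit_neq0 (u v : pt) : on_sphere u -> on_sphere v -> u <> v -> u <> popp v ->
  0 < dot (cross u v) (cross u v).
Proof.
  intros Hu Hv H1 H2. pose proof (unit_dot_lt1 u v Hu Hv H1). pose proof (unit_dot_gtm1 u v Hu Hv H2).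
  rewrite dot_cross_cross. unfold on_sphere in Hu, Hv. rewrite Hu, Hv. nra.
Qed.

Lemma cross_frame_decomposition (u v w : pt) :
  pscale (dot (cross u v) (cross u v)) w =
  padd (lincomb (dot w u * dot v v - dot w v * dot u v) u (dot w v * dot u u - dot w u * dot u v) v)
       (pscale (dot w (cross u v)) (cross u v)).
Proof. destruct u, v, w; pt_ring. Qed.

Lemma triple_product_eq0 (n p q r : pt) : n <> pzero ->
  dot n p = 0 -> dot n q = 0 -> dot n r = 0 -> dot (cross p q) r = 0.
Proof.
  intros Hn Hp Hq Hr.
  assert (E : pscale (dot (cross p q) r) n = pzero).
  { transitivity (padd (lincomb (dot p n) (cross q r) (dot q n) (cross r p))
                       (pscale (dot r n) (cross p q))).
    - destruct n, p, q, r; pt_ring.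
    - rewrite !(dot_comm _ n), Hp, Hq, Hr. pt_ring. }
  apply (f_equal (fun v => dot v n)) in E. rewrite dot_scalel, dot_zerol in E.
  pose proof (dot_self_pos n Hn). nra.
Qed.

Lemma lincomb_sqr_lb (p q : pt) (t : R) : on_sphere p -> on_sphere q -> 0 <= t <= 1 ->
  (1 + dot p q) / 2 <= dot (lincomb (1 - t) p t q) (lincomb (1 - t) p t q).
Proof.
  unfold on_sphere; intros Hp Hq Ht.
  unfold lincomb. rewrite !dot_addl, !dot_addr, !dot_scalel, !dot_scaler, Hp, Hq, (dot_comm q p).
  pose proof (unit_dot_bounds p q Hp Hq).
  assert (0 <= (1 - dot p q) * ((1 - 2 * t) * (1 - 2 * t)))
    by (apply Rmult_le_pos; [lra | apply Rle_0_sqr]).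
  unfold Rdiv. nra.
Qed.

Lemma lincomb_sqr_pos (p q : pt) (t : R) : on_sphere p -> on_sphere q -> -1 < dot p q ->
  0 <= t <= 1 -> 0 < dot (lincomb (1 - t) p t q) (lincomb (1 - t) p t q).
Proof. intros Hp Hq Hpq Ht. pose proof (lincomb_sqr_lb p q t Hp Hq Ht). lra. Qed.

Lemma lincomb_0 (p q : pt) : lincomb 1 p 0 q = p.
Proof. pt_ring. Qed.
Lemma lincomb_1 (p q : pt) : lincomb 0 p 1 q = q.
Proof. pt_ring. Qed.

Lemma finite_upper_bound {X : Type} (h : X -> R) (l : list X) :
  exists M, 0 < M /\ forall a, In a l -> h a <= M.
Proof.
  induction l as [|b l [M [HM Hl]]].
  - exists 1; split; [lra | intros a []].
  - exists (Rmax M (h b)). split; [apply Rlt_le_trans with M; auto; apply Rmax_l|].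
    intros a [<-|Ha]; [apply Rmax_r | eapply Rle_trans; [apply Hl; auto | apply Rmax_l]].
Qed.

Lemma finite_lower_bound {X : Type} (h : X -> R) (l : list X) :
  (forall a, In a l -> 0 < h a) -> exists g, 0 < g /\ forall a, In a l -> g <= h a.
Proof.
  intros Hpos. destruct (finite_upper_bound (fun a => / h a) l) as [M [HM Hl]].
  exists (/ M). split; [apply Rinv_0_lt_compat; auto|]. intros a Ha.
  pose proof (Hpos a Ha). rewrite <- (Rinv_inv (h a)).
  apply Rinv_le_contravar; auto. apply Rinv_0_lt_compat; auto.
Qed.

(** * The hull: cones, interior and closure *)

Lemma cone_zero (A : list pt) : in_cone A pzero.
Proof. induction A; simpl; auto. exists 0, pzero; repeat split; auto; try lra. pt_ring. Qed.

Lemma cone_add (A : list pt) (p q : pt) : in_cone A p -> in_cone A q -> in_cone A (padd p q).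
Proof.
  revert p q; induction A; simpl; intros p q Hp Hq.
  - subst; pt_ring.
  - destruct Hp as [t1 [q1 [H1 [H2 ->]]]], Hq as [t2 [q2 [H4 [H5 ->]]]].
    exists (t1 + t2), (padd q1 q2). repeat split; auto; try lra. pt_ring.
Qed.

Lemma cone_scale (A : list pt) (s : R) (p : pt) : 0 <= s -> in_cone A p -> in_cone A (pscale s p).
Proof.
  revert p; induction A; simpl; intros p Hs Hp.
  - subst; pt_ring.
  - destruct Hp as [t1 [q1 [H1 [H2 ->]]]]. exists (s * t1), (pscale s q1).
    repeat split; auto; [nra | pt_ring].
Qed.

Lemma cone_unscale (A : list pt) (s : R) (p : pt) :
  0 < s -> in_cone A (pscale s p) -> in_cone A p.
Proof.
  intros Hs H. replace p with (pscale (/ s) (pscale s p)) by (pt_field; lra).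
  apply cone_scale; auto. left; apply Rinv_0_lt_compat; auto.
Qed.

Lemma cone_generator (A : list pt) (a : pt) : In a A -> in_cone A a.
Proof.
  induction A as [|b A IH]; simpl; [tauto|]. intros [<-|Ha].
  - exists 1, pzero. repeat split; try lra; [apply cone_zero | pt_ring].
  - exists 0, a. repeat split; auto; try lra. pt_ring.
Qed.

Lemma cone_lincomb (A : list pt) (a b : R) (p q : pt) :
  0 <= a -> 0 <= b -> in_cone A p -> in_cone A q -> in_cone A (lincomb a p b q).
Proof. intros; apply cone_add; apply cone_scale; auto. Qed.

Lemma cone_dot_lower (A : list pt) (c : pt) (g : R) :
  (forall a, In a A -> on_sphere a) -> (forall a, In a A -> g <= dot c a) -> 0 <= g ->
  forall z, in_cone A z -> g * pnorm z <= dot c z.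
Proof.
  intros HU HA Hg. induction A as [|a A IH]; simpl; intros z Hz.
  - subst z. unfold pnorm. rewrite !dot_zerol, sqrt_0, dot_comm, dot_zerol. lra.
  - destruct Hz as [t [q [Ht [Hq ->]]]].
    pose proof (IH (fun b Hb => HU b (or_intror Hb)) (fun b Hb => HA b (or_intror Hb)) q Hq).
    eapply Rle_trans; [apply Rmult_le_compat_l; [lra | apply pnorm_triangle]|].
    rewrite dot_addr, dot_scaler, pnorm_scale, Rabs_right, pnorm_unit by
      (try apply HU; simpl; auto; lra).
    pose proof (HA a (or_introl eq_refl)). nra.
Qed.

Definition sph_closure (S : pt -> Prop) (z : pt) : Prop :=
  on_sphere z /\ forall eps, eps > 0 -> exists w, S w /\ dist z w < eps.

Lemma interior_in (S : pt -> Prop) (z : pt) : sph_interior S z -> S z.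
Proof. intros [Hz [e [He H]]]. apply H; auto. rewrite dist_refl; lra. Qed.

Lemma interior_open (S : pt -> Prop) (z : pt) : sph_interior S z ->
  exists e, e > 0 /\ forall q, on_sphere q -> dist z q < e -> sph_interior S q.
Proof.
  intros [Hz [e [He H]]]. exists (e / 2). split; [lra|]. intros q Hq Hd.
  split; auto. exists (e / 2). split; [lra|]. intros r Hr Hd2. apply H; auto.
  pose proof (dist_triangle z q r). lra.
Qed.

Lemma boundary_not_interior (S : pt -> Prop) (y : pt) : sph_boundary S y -> ~ sph_interior S y.
Proof.
  intros [Hy HB] [_ [e [He H]]]. destruct (HB e He) as [_ [q [Hq [Hd HnS]]]]. auto.
Qed.

Lemma not_interior_witness (S : pt -> Prop) (y : pt) : on_sphere y -> ~ sph_interior S y ->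
  forall eps, eps > 0 -> exists q, on_sphere q /\ dist y q < eps /\ ~ S q.
Proof.
  intros Hy Hn eps He. apply NNPP. intro C. apply Hn. split; auto. exists eps. split; auto.
  intros q Hq Hd. apply NNPP. intro Hs. apply C. exists q; auto.
Qed.

Lemma boundary_closure (S : pt -> Prop) (y : pt) : sph_boundary S y -> sph_closure S y.
Proof.
  intros [Hy HB]. split; auto. intros e He. destruct (HB e He) as [[q [_ [Hd HS]]] _]. eauto.
Qed.

Lemma interior_closure (S : pt -> Prop) (y : pt) : sph_interior S y -> sph_closure S y.
Proof.
  intros Hi. split; [destruct Hi; auto|]. intros e He. exists y.
  split; [apply interior_in; auto | rewrite dist_refl; lra].
Qed.

Lemma sph_closure_refl (S : pt -> Prop) (y : pt) : on_sphere y -> S y -> sph_closure S y.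
Proof. intros Hy HS. split; auto. intros e He. exists y. rewrite dist_refl. split; auto; lra. Qed.

Lemma closure_dot_pos (A : list pt) (c y : pt) :
  (forall a, In a A -> on_sphere a) -> (forall p, sph_hull A p -> dot c p > 0) ->
  sph_closure (sph_hull A) y -> 0 < dot c y.
Proof.
  intros HU Hc [Hy Hcl].
  destruct (finite_lower_bound (dot c) A) as [g [Hg HgA]].
  { intros a Ha. apply Rgt_lt, Hc. split; [auto | apply cone_generator; auto]. }
  pose proof (pnorm_ge0 c).
  destruct (Hcl (g / (2 * (pnorm c + 1)))) as [w [[Hw Hwc] Hd]].
  { apply Rlt_gt, Rdiv_lt_0_compat; lra. }
  pose proof (cone_dot_lower A c g HU HgA ltac:(lra) w Hwc) as Hgw.
  rewrite pnorm_unit in Hgw by auto.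
  pose proof (dot_sub_le c y w).
  assert (pnorm c * dist y w <= (pnorm c + 1) * (g / (2 * (pnorm c + 1)))).
  { apply Rmult_le_compat; try lra; apply dist_ge0. }
  replace ((pnorm c + 1) * (g / (2 * (pnorm c + 1)))) with (g / 2) in H1 by (field; lra).
  lra.
Qed.

Lemma interior_cone_nbhd (A : list pt) (z : pt) : sph_interior (sph_hull A) z ->
  exists e, 0 < e /\ forall r, pnorm (psub r z) < e -> in_cone A r.
Proof.
  intros [Hz [e0 [He0 HZ]]].
  assert (Hm : 0 < Rmin e0 1) by (apply Rmin_glb_lt; lra).
  pose proof (Rmin_l e0 1). pose proof (Rmin_r e0 1).
  exists (Rmin e0 1 / 2). split; [lra|]. intros r Hr.
  assert (Hrr : 0 < dot r r).
  { pose proof (pnorm_sub_ge z r). replace (psub z r) with (popp (psub r z)) in H1 by pt_ring.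
    rewrite pnorm_opp, pnorm_unit in H1 by auto. rewrite <- pnorm_sqr.
    apply Rmult_lt_0_compat; lra. }
  assert (Hzz : 0 < dot z z) by (rewrite Hz; lra).
  assert (Hn : sph_hull A (normalize r)).
  { apply HZ; [apply sphere_normalize; auto|].
    rewrite dist_comm, dist_pnorm, <- (normalize_unit z) at 1 by auto.
    eapply Rle_lt_trans; [apply normalize_lipschitz; auto|].
    rewrite (pnorm_unit z Hz). lra. }
  destruct Hn as [_ Hn]. apply cone_unscale with (/ pnorm r); auto.
  apply Rinv_0_lt_compat, pnorm_pos; auto.
Qed.

(* If [q] is close to [normalize p], [p = l z + mu w], then [pnorm p * q = l r + mu w'] with
   [w'] a hull point close to [w] and [r] close to [z], hence in the cone. *)
Lemma interior_lincomb_closure (A : list pt) (z w : pt) (l mu : R) :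
  sph_interior (sph_hull A) z -> sph_closure (sph_hull A) w -> 0 < l -> 0 <= mu ->
  0 < dot (lincomb l z mu w) (lincomb l z mu w) ->
  sph_interior (sph_hull A) (normalize (lincomb l z mu w)).
Proof.
  intros Hz [_ Hw] Hl Hmu Hp.
  destruct (interior_cone_nbhd A z Hz) as [e [He Hcone]].
  set (L := pnorm (lincomb l z mu w)).
  assert (HL : 0 < L) by (apply pnorm_pos; auto).
  destruct (Hw (e * l / (2 * (mu + 1)))) as [w' [[_ Hw'] Hdw]].
  { apply Rlt_gt, Rdiv_lt_0_compat; nra. }
  split; [apply sphere_normalize; auto|].
  exists (e * l / (2 * L)). split; [apply Rlt_gt, Rdiv_lt_0_compat; nra|].
  intros q Hq Hdq. split; auto.
  set (r := pscale (/ l) (lincomb L q (- mu) w')).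
  assert (Er : psub r z = pscale (/ l) (lincomb L (psub q (normalize (lincomb l z mu w)))
                                                mu (psub w w'))).
  { unfold r, normalize. fold L. pt_field; lra. }
  assert (Hr : in_cone A r).
  { apply Hcone. rewrite Er, pnorm_scale, Rabs_right by (left; apply Rinv_0_lt_compat; lra).
    eapply Rle_lt_trans; [apply Rmult_le_compat_l; [left; apply Rinv_0_lt_compat; lra
                                                   | apply pnorm_triangle]|].
    rewrite !pnorm_scale, (Rabs_right L), (Rabs_right mu), <- !dist_pnorm by lra.
    rewrite dist_comm in Hdq.
    assert (L * dist q (normalize (lincomb l z mu w)) < e * l / 2).
    { replace (e * l / 2) with (L * (e * l / (2 * L))) by (field; lra).
      apply Rmult_lt_compat_l; auto. }
    assert (mu * dist w w' <= e * l / 2).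
    { replace (e * l / 2) with ((mu + 1) * (e * l / (2 * (mu + 1)))) by (field; lra).
      apply Rmult_le_compat; try lra; apply dist_ge0. }
    apply Rmult_lt_reg_l with l; auto. rewrite <- Rmult_assoc, Rinv_r by lra. lra. }
  apply cone_unscale with L; auto.
  replace (pscale L q) with (lincomb l r mu w') by (unfold r; pt_field; lra).
  apply cone_lincomb; auto; lra.
Qed.

Lemma interior_positive_comb (A : list pt) (z r p : pt) (l mu k : R) :
  sph_interior (sph_hull A) z -> sph_closure (sph_hull A) r -> 0 < l -> 0 <= mu ->
  on_sphere p -> 0 < k -> pscale k p = lincomb l z mu r -> sph_interior (sph_hull A) p.
Proof.
  intros Hz Hr Hl Hmu Hp Hk E.
  assert (Hpos : 0 < dot (lincomb l z mu r) (lincomb l z mu r)).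
  { rewrite <- E, dot_scalel, dot_scaler, Hp. nra. }
  pose proof (interior_lincomb_closure A z r l mu Hz Hr Hl Hmu Hpos) as H.
  rewrite <- E, normalize_scale, normalize_unit in H; auto. rewrite Hp; lra.
Qed.

(** * Paths in the diagram *)

Definition lipschitz_on01 (f : R -> pt) (L : R) : Prop :=
  forall s t, 0 <= s <= 1 -> 0 <= t <= 1 -> dist (f s) (f t) <= L * Rabs (s - t).

(* Lipschitz rather than merely continuous paths: the bound survives concatenation. *)
Definition lip_connected (D : list arc) (S : pt -> Prop) (x y : pt) : Prop :=
  exists (f : R -> pt) (L : R), 0 <= L /\ lipschitz_on01 f L /\ f 0 = x /\ f 1 = y /\
    (forall t, 0 <= t <= 1 -> exists a, In a D /\ on_arc a (f t)) /\
    (forall t, 0 < t < 1 -> sph_interior S (f t)).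

Lemma lipschitz_on01_close (f : R -> pt) (L : R) : 0 <= L -> lipschitz_on01 f L ->
  forall eps, eps > 0 -> exists d, d > 0 /\
    forall s t, 0 <= s <= 1 -> 0 <= t <= 1 -> Rabs (s - t) <= d -> dist (f s) (f t) < eps.
Proof.
  intros HL Hf eps He. exists (eps / (2 * (L + 1))). split; [apply Rlt_gt, Rdiv_lt_0_compat; lra|].
  intros s t Hs Ht Hd. eapply Rle_lt_trans; [apply Hf; auto|].
  apply Rle_lt_trans with ((L + 1) * (eps / (2 * (L + 1)))).
  - apply Rmult_le_compat; auto using Rabs_pos; lra.
  - replace ((L + 1) * (eps / (2 * (L + 1)))) with (eps / 2) by (field; lra). lra.
Qed.

Lemma lip_connected_int_connected (D : list arc) (S : pt -> Prop) (x y : pt) :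
  lip_connected D S x y -> int_connected D S x y.
Proof.
  intros [f [L [HL [Hf [H0 [H1 [Ha Hi]]]]]]].
  exists f. split; auto. intros t Ht eps Heps.
  destruct (lipschitz_on01_close f L HL Hf eps Heps) as [d [Hd Hfd]].
  exists d. split; auto. intros s Hs Hst. apply Hfd; auto; lra.
Qed.

Lemma lip_connected_refl (D : list arc) (S : pt -> Prop) (a : arc) (x : pt) :
  In a D -> on_arc a x -> sph_interior S x -> lip_connected D S x x.
Proof.
  intros Ha Hx Hi. exists (fun _ => x), 0.
  split; [lra|]. split; [intros s t _ _; rewrite dist_refl; lra|]. eauto 6.
Qed.

Lemma lip_connected_trans (D : list arc) (S : pt -> Prop) (x y z : pt) :
  lip_connected D S x y -> lip_connected D S y z -> sph_interior S y -> lip_connected D S x z.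
Proof.
  intros [f1 [L1 [HL1 [Hl1 [F10 [F11 [Ha1 Hi1]]]]]]] [f2 [L2 [HL2 [Hl2 [F20 [F21 [Ha2 Hi2]]]]]]] Hy.
  set (f := fun t => if Rle_dec t (1/2) then f1 (2 * t) else f2 (2 * t - 1)).
  assert (Across : forall s t, 0 <= s <= 1/2 -> 1/2 < t <= 1 ->
             dist (f1 (2 * s)) (f2 (2 * t - 1)) <= 2 * (L1 + L2) * Rabs (s - t)).
  { intros s t Hs Ht. eapply Rle_trans; [apply (dist_triangle _ y)|].
    pose proof (Hl1 (2 * s) 1 ltac:(lra) ltac:(lra)). pose proof (Hl2 0 (2 * t - 1) ltac:(lra) ltac:(lra)).
    rewrite F11 in H. rewrite F20 in H0.
    rewrite Rabs_left1 in H, H0 by lra. rewrite Rabs_left1 by lra.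
    assert (L1 * - (2 * s - 1) <= L1 * (2 * (t - s))) by (apply Rmult_le_compat_l; lra).
    assert (L2 * - (0 - (2 * t - 1)) <= L2 * (2 * (t - s))) by (apply Rmult_le_compat_l; lra).
    lra. }
  exists f, (2 * (L1 + L2)). split; [lra|]. split; [|unfold f; split; [|split; [|split]]].
  - intros s t Hs Ht. unfold f. destruct (Rle_dec s (1/2)), (Rle_dec t (1/2)).
    + eapply Rle_trans; [apply Hl1; lra|]. replace (2 * s - 2 * t) with (2 * (s - t)) by ring.
      rewrite Rabs_mult, Rabs_right by lra. pose proof (Rabs_pos (s - t)). nra.
    + apply Across; lra.
    + rewrite dist_comm, Rabs_minus_sym. apply Across; lra.
    + eapply Rle_trans; [apply Hl2; lra|]. replace (2 * s - 1 - (2 * t - 1)) with (2 * (s - t)) by ring.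
      rewrite Rabs_mult, Rabs_right by lra. pose proof (Rabs_pos (s - t)). nra.
  - destruct (Rle_dec 0 (1/2)); [|lra]. rewrite Rmult_0_r; auto.
  - destruct (Rle_dec 1 (1/2)); [lra|]. replace (2 * 1 - 1) with 1 by ring; auto.
  - intros t Ht. destruct (Rle_dec t (1/2)); [apply Ha1 | apply Ha2]; lra.
  - intros t Ht. destruct (Rle_dec t (1/2)).
    + destruct (Req_dec t (1/2)) as [->|E]; [|apply Hi1; lra].
      replace (2 * (1/2)) with 1 by field. rewrite F11; auto.
    + apply Hi2; lra.
Qed.

Lemma lipschitz_interior_near (S : pt -> Prop) (f : R -> pt) (L : R) :
  0 <= L -> lipschitz_on01 f L -> (forall t, 0 <= t <= 1 -> on_sphere (f t)) ->
  forall t0, 0 <= t0 <= 1 -> sph_interior S (f t0) ->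
  exists d, d > 0 /\ forall t, 0 <= t <= 1 -> Rabs (t - t0) <= d -> sph_interior S (f t).
Proof.
  intros HL Hf Hs t0 Ht0 Hi. destruct (interior_open _ _ Hi) as [r [Hr Hrr]].
  destruct (lipschitz_on01_close f L HL Hf r Hr) as [d [Hd Hfd]].
  exists d. split; auto. intros t Ht Htd. apply Hrr; auto. rewrite dist_comm. apply Hfd; auto.
Qed.

(* The first exit time is the supremum of the times up to which the path stays interior. *)
Lemma lipschitz_path_exit (S : pt -> Prop) (f : R -> pt) (L : R) :
  0 <= L -> lipschitz_on01 f L -> (forall t, 0 <= t <= 1 -> on_sphere (f t)) ->
  sph_interior S (f 0) -> ~ sph_interior S (f 1) ->
  exists T, 0 < T <= 1 /\ sph_boundary S (f T) /\
    forall tau, 0 < tau < T -> sph_interior S (f tau).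
Proof.
  intros HL Hf Hs Hi0 Hn1.
  set (I := fun t => 0 <= t <= 1 /\ forall t', 0 <= t' <= t -> sph_interior S (f t')).
  assert (I0 : I 0) by (split; [lra | intros t' Ht'; replace t' with 0 by lra; auto]).
  assert (Beyond : forall t, 0 <= t < 1 -> (forall t', 0 <= t' < t -> sph_interior S (f t')) ->
                   sph_interior S (f t) -> exists t1, t < t1 /\ I t1).
  { intros t Ht Hbelow Hit.
    destruct (lipschitz_interior_near S f L HL Hf Hs t ltac:(lra) Hit) as [d [Hd Hdd]].
    pose proof (Rmin_l (t + d) 1). pose proof (Rmin_r (t + d) 1).
    assert (t < Rmin (t + d) 1) by (apply Rmin_glb_lt; lra).
    exists (Rmin (t + d) 1). split; [lra|]. split; [lra|].
    intros t' Ht'. destruct (Rlt_le_dec t' t); [apply Hbelow; lra|].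
    apply Hdd; [lra | rewrite Rabs_right; lra]. }
  destruct (completeness I) as [T [HTu HTl]]; [exists 1; intros t [Ht _]; lra | eauto|].
  assert (T1 : T <= 1) by (apply HTl; intros t [Ht _]; lra).
  assert (Tpos : 0 < T).
  { destruct (Beyond 0) as [t1 [Ht1 It1]]; [lra | intros; lra | auto |].
    pose proof (HTu t1 It1). lra. }
  assert (Below : forall t, 0 <= t < T -> sph_interior S (f t)).
  { intros t Ht. apply NNPP. intro C. assert (T <= t); [|lra].
    apply HTl. intros t' [Ht' Hint]. destruct (Rle_lt_dec t' t); auto.
    exfalso. apply C, Hint. lra. }
  assert (NotT : ~ sph_interior S (f T)).
  { intros Hi. destruct (Rle_lt_or_eq_dec T 1 T1) as [Tl| ->]; [|auto].
    destruct (Beyond T) as [t1 [Ht1 It1]]; [lra | intros; apply Below; lra | auto |].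
    pose proof (HTu t1 It1). lra. }
  exists T. split; [lra|]. split; [|intros tau Htau; apply Below; lra].
  split; [apply Hs; lra|]. intros eps Heps. split; [|apply not_interior_witness; auto; apply Hs; lra].
  destruct (lipschitz_on01_close f L HL Hf eps Heps) as [d [Hd Hfd]].
  pose proof (Rmax_l (T - d) (T / 2)). pose proof (Rmax_r (T - d) (T / 2)).
  set (t := Rmax (T - d) (T / 2)) in *.
  assert (t < T) by (apply Rmax_lub_lt; lra).
  exists (f t). split; [apply Hs; lra|]. split.
  - apply Hfd; try lra. rewrite Rabs_right; lra.
  - apply interior_in, Below. lra.
Qed.

Lemma arc_path_lipschitz (p q : pt) (T : R) : on_sphere p -> on_sphere q -> -1 < dot p q ->
  0 <= T <= 1 ->
  exists L, 0 <= L /\ lipschitz_on01 (fun t => normalize (lincomb (1 - T * t) p (T * t) q)) L.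
Proof.
  intros Hp Hq Hk HT.
  set (mu := sqrt ((1 + dot p q) / 2)).
  assert (Hmu : 0 < mu) by (apply sqrt_lt_R0; lra).
  assert (Lb : forall t, 0 <= t <= 1 -> mu <= pnorm (lincomb (1 - T * t) p (T * t) q)).
  { intros t Ht. apply sqrt_le_1_alt, lincomb_sqr_lb; auto; nra. }
  clearbody mu.
  assert (Pos : forall t, 0 <= t <= 1 ->
            0 < dot (lincomb (1 - T * t) p (T * t) q) (lincomb (1 - T * t) p (T * t) q)).
  { intros t Ht. pose proof (Lb t Ht). rewrite <- pnorm_sqr. nra. }
  assert (Hpq : pnorm (psub p q) <= 2).
  { replace (psub p q) with (padd p (popp q)) by pt_ring.
    eapply Rle_trans; [apply pnorm_triangle|]. rewrite pnorm_opp, !pnorm_unit by auto. lra. }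
  exists (4 / mu). split; [left; apply Rdiv_lt_0_compat; lra|].
  intros s t Hs Ht. cbv beta. rewrite dist_pnorm.
  eapply Rle_trans; [apply normalize_lipschitz; auto|].
  replace (psub (lincomb (1 - T * s) p (T * s) q) (lincomb (1 - T * t) p (T * t) q))
    with (pscale (T * (t - s)) (psub p q)) by pt_ring.
  rewrite pnorm_scale, Rabs_mult, (Rabs_right T), Rabs_minus_sym by lra.
  pose proof (Lb t Ht). pose proof (pnorm_ge0 (psub p q)). pose proof (Rabs_pos (s - t)).
  apply Rle_trans with (2 * (T * Rabs (s - t) * pnorm (psub p q)) / mu).
  - unfold Rdiv. apply Rmult_le_compat_l; [repeat apply Rmult_le_pos; lra|].
    apply Rinv_le_contravar; auto.
  - assert (T * pnorm (psub p q) <= 2) by nra.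
    assert (2 * (T * Rabs (s - t) * pnorm (psub p q)) <= 4 * Rabs (s - t)) by nra.
    assert (0 < / mu) by (apply Rinv_0_lt_compat; lra).
    unfold Rdiv. nra.
Qed.

Lemma on_arc_normalize_lincomb (a : arc) (p q : pt) (al be : R) :
  on_arc a p -> on_arc a q -> 0 <= al -> 0 <= be ->
  0 < dot (lincomb al p be q) (lincomb al p be q) -> on_arc a (normalize (lincomb al p be q)).
Proof.
  intros [Hp [s1 [t1 [Hs1 [Ht1 Ep]]]]] [Hq [s2 [t2 [Hs2 [Ht2 Eq]]]]] Hal Hbe Hpos.
  split; [apply sphere_normalize; auto|].
  pose proof (pnorm_pos _ Hpos) as HN. set (N := pnorm (lincomb al p be q)).
  assert (0 <= / N) by (left; apply Rinv_0_lt_compat; auto).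
  exists (/ N * (al * s1 + be * s2)), (/ N * (al * t1 + be * t2)).
  split; [apply Rmult_le_pos; nra|]. split; [apply Rmult_le_pos; nra|].
  unfold normalize. fold N. rewrite Ep, Eq. pt_ring.
Qed.

Lemma lip_connected_along_arc (D : list arc) (S : pt -> Prop) (a : arc) (p q : pt) (T : R) :
  In a D -> on_arc a p -> on_arc a q -> -1 < dot p q -> 0 < T <= 1 ->
  (forall tau, 0 < tau < T -> sph_interior S (normalize (lincomb (1 - tau) p tau q))) ->
  lip_connected D S p (normalize (lincomb (1 - T) p T q)).
Proof.
  intros Ha Hp Hq Hk HT Hint.
  assert (Sp : on_sphere p) by (destruct Hp; auto). assert (Sq : on_sphere q) by (destruct Hq; auto).
  destruct (arc_path_lipschitz p q T Sp Sq Hk ltac:(lra)) as [L [HL Hl]].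
  exists (fun t => normalize (lincomb (1 - T * t) p (T * t) q)), L.
  split; [auto|]. split; [auto|]. split; [|split; [|split]].
  - rewrite Rmult_0_r, Rminus_0_r, lincomb_0. apply normalize_unit; auto.
  - rewrite Rmult_1_r. auto.
  - intros t Ht. exists a. split; auto. apply on_arc_normalize_lincomb; auto; try nra.
    apply lincomb_sqr_pos; auto; nra.
  - intros t Ht. apply Hint. nra.
Qed.

Lemma lip_connected_along_arc_end (D : list arc) (S : pt -> Prop) (a : arc) (p q : pt) :
  In a D -> on_arc a p -> on_arc a q -> -1 < dot p q ->
  (forall tau, 0 < tau < 1 -> sph_interior S (normalize (lincomb (1 - tau) p tau q))) ->
  lip_connected D S p q.
Proof.
  intros Ha Hp Hq Hk Hint.
  pose proof (lip_connected_along_arc D S a p q 1 Ha Hp Hq Hk ltac:(lra) Hint) as H.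
  rewrite Rminus_diag, lincomb_1, normalize_unit in H; destruct Hq; auto.
Qed.

Lemma arc_exit (S : pt -> Prop) (q e : pt) : on_sphere q -> on_sphere e -> -1 < dot q e ->
  sph_interior S q -> ~ sph_interior S e ->
  exists T, 0 < T <= 1 /\ sph_boundary S (normalize (lincomb (1 - T) q T e)) /\
    forall tau, 0 < tau < T -> sph_interior S (normalize (lincomb (1 - tau) q tau e)).
Proof.
  intros Hq He Hk Hiq Hne.
  destruct (arc_path_lipschitz q e 1 Hq He Hk ltac:(lra)) as [L [HL Hl]].
  destruct (lipschitz_path_exit S _ L HL Hl) as [T [HT [Hb Hin]]]; cbv beta; rewrite ?Rmult_1_l.
  - intros t Ht. apply sphere_normalize, lincomb_sqr_pos; auto; lra.
  - rewrite Rminus_0_r, lincomb_0, normalize_unit; auto.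
  - rewrite Rminus_diag, lincomb_1, normalize_unit; auto.
  - exists T. rewrite Rmult_1_l in Hb. split; [auto | split; [auto|]].
    intros tau Htau. specialize (Hin tau Htau). rewrite Rmult_1_l in Hin. auto.
Qed.

(** * Arcs *)

Lemma arc_normal_pos (a : arc) : arc_wf a ->
  0 < dot (cross (asrc a) (adst a)) (cross (asrc a) (adst a)).
Proof. intros [Hu [Hv [Hne Hna]]]. apply cross_unit_neq0; auto. Qed.

Lemma arc_endpoints_independent (a : arc) (al be : R) : arc_wf a ->
  lincomb al (asrc a) be (adst a) = pzero -> al = 0 /\ be = 0.
Proof.
  intros Hw H. pose proof (arc_normal_pos a Hw).
  set (u := asrc a) in *. set (v := adst a) in *.
  assert (E1 : dot (cross (lincomb al u be v) v) (cross u v) = al * dot (cross u v) (cross u v))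
    by (destruct u, v; pt_unfold; ring).
  assert (E2 : dot (cross u (lincomb al u be v)) (cross u v) = be * dot (cross u v) (cross u v))
    by (destruct u, v; pt_unfold; ring).
  rewrite H in E1, E2.
  assert (Z1 : dot (cross pzero v) (cross u v) = 0) by (destruct u, v; pt_unfold; ring).
  assert (Z2 : dot (cross u pzero) (cross u v) = 0) by (destruct u, v; pt_unfold; ring).
  split; nra.
Qed.

Lemma great_circle_span (a : arc) (w : pt) : arc_wf a -> on_great_circle_of a w ->
  exists al be, w = lincomb al (asrc a) be (adst a).
Proof.
  intros Hw H. pose proof (arc_normal_pos a Hw) as HN.
  pose proof (cross_frame_decomposition (asrc a) (adst a) w) as E.
  unfold on_great_circle_of in H. rewrite (dot_comm w (cross _ _)), H in E.
  set (N2 := dot (cross (asrc a) (adst a)) (cross (asrc a) (adst a))) in *.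
  exists ((dot w (asrc a) * dot (adst a) (adst a) - dot w (adst a) * dot (asrc a) (adst a)) / N2),
         ((dot w (adst a) * dot (asrc a) (asrc a) - dot w (asrc a) * dot (asrc a) (adst a)) / N2).
  apply (f_equal (pscale (/ N2))) in E.
  replace (pscale (/ N2) (pscale N2 w)) with w in E by (pt_field; lra).
  rewrite E at 1. clearbody N2. pt_field; lra.
Qed.

Definition arc_ends (b : arc) (e o : pt) : Prop :=
  (e = asrc b /\ o = adst b) \/ (e = adst b /\ o = asrc b).

Lemma endpoint_arc_ends (b : arc) (e : pt) : is_endpoint b e -> exists o, arc_ends b e o.
Proof. intros [->| ->]; [exists (adst b); left | exists (asrc b); right]; auto. Qed.

Lemma arc_ends_endpoint (b : arc) (e o : pt) : arc_ends b e o -> is_endpoint b e.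
Proof. intros [[-> ->]|[-> ->]]; [left|right]; auto. Qed.

Lemma arc_ends_coords (b : arc) (e o z : pt) : arc_ends b e o -> on_arc b z ->
  exists s t, 0 <= s /\ 0 <= t /\ z = lincomb s e t o.
Proof.
  intros [[-> ->]|[-> ->]] [_ [s [t [Hs [Ht E]]]]]; [exists s, t | exists t, s];
    repeat split; auto; rewrite E; pt_ring.
Qed.

Lemma arc_ends_relint_coords (b : arc) (e o z : pt) : arc_ends b e o -> in_relint b z ->
  exists s t, 0 < s /\ 0 < t /\ z = lincomb s e t o.
Proof.
  intros [[-> ->]|[-> ->]] [_ [s [t [Hs [Ht E]]]]]; [exists s, t | exists t, s];
    repeat split; auto; rewrite E; pt_ring.
Qed.

Lemma arc_ends_independent (b : arc) (e o : pt) (al be : R) : arc_wf b -> arc_ends b e o ->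
  lincomb al e be o = pzero -> al = 0 /\ be = 0.
Proof.
  intros Hw [[-> ->]|[-> ->]] H; [apply (arc_endpoints_independent b); auto|].
  assert (E : lincomb be (asrc b) al (adst b) = pzero) by (rewrite <- H; pt_ring).
  apply arc_endpoints_independent in E; tauto.
Qed.

Lemma arc_ends_on_arc (b : arc) (e o : pt) : arc_wf b -> arc_ends b e o -> on_arc b e /\ on_arc b o.
Proof.
  intros Hw Heo. pose proof Hw as [Hu [Hv _]].
  split; split; try (destruct Heo as [[-> ->]|[-> ->]]; auto);
    [exists 1, 0 | exists 0, 1 | exists 0, 1 | exists 1, 0];
    (split; [lra | split; [lra | pt_ring]]).
Qed.

Lemma relint_on_arc (a : arc) (p : pt) : in_relint a p -> on_arc a p.
Proof. intros [Hp [s [t [Hs [Ht E]]]]]. split; auto. exists s, t. repeat split; auto; lra. Qed.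

Lemma relint_normalize (b : arc) (e o : pt) (s t : R) : arc_wf b -> arc_ends b e o ->
  0 < s -> 0 < t -> in_relint b (normalize (lincomb s e t o)).
Proof.
  intros Hw Heo Hs Ht.
  assert (Hp : 0 < dot (lincomb s e t o) (lincomb s e t o)).
  { apply dot_self_pos. intro E. apply (arc_ends_independent b e o s t) in E; auto. lra. }
  pose proof (pnorm_pos _ Hp). assert (0 < / pnorm (lincomb s e t o)) by (apply Rinv_0_lt_compat; auto).
  split; [apply sphere_normalize; auto|]. unfold normalize. set (N := pnorm _) in *. clearbody N.
  destruct Heo as [[-> ->]|[-> ->]]; [exists (/ N * s), (/ N * t) | exists (/ N * t), (/ N * s)];
    (split; [nra | split; [nra | pt_ring]]).
Qed.

Lemma relint_dot_end_gtm1 (b : arc) (x e o : pt) : arc_wf b -> in_relint b x -> arc_ends b e o ->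
  -1 < dot x e.
Proof.
  intros Hw Hr Heo. destruct (arc_ends_relint_coords b e o x Heo Hr) as [s [t [Hs [Ht Ex]]]].
  apply unit_dot_gtm1; [destruct Hr; auto | destruct (arc_ends_on_arc b e o Hw Heo) as [[He _] _]; auto|].
  intro E. rewrite Ex in E.
  assert (lincomb (s + 1) e t o = pzero).
  { transitivity (padd (lincomb s e t o) e); [pt_ring | rewrite E; pt_ring]. }
  apply (arc_ends_independent b e o) in H; auto. lra.
Qed.

Lemma endpoint_not_relint (a : arc) (e : pt) : arc_wf a -> is_endpoint a e -> ~ in_relint a e.
Proof.
  intros Hw He Hr. destruct (endpoint_arc_ends a e He) as [o Heo].
  destruct (arc_ends_relint_coords a e o e Heo Hr) as [s [t [Hs [Ht E]]]].
  assert (lincomb (s - 1) e t o = pzero).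
  { transitivity (psub (lincomb s e t o) e); [pt_ring | rewrite <- E; pt_ring]. }
  apply (arc_ends_independent a e o) in H; auto. lra.
Qed.

Lemma on_arc_cases (a : arc) (p : pt) : arc_wf a -> on_arc a p ->
  in_relint a p \/ is_endpoint a p.
Proof.
  intros Hw [Hp [s [t [Hs [Ht E]]]]]. pose proof Hw as [Hu [Hv _]].
  destruct (Rle_lt_or_eq_dec 0 s Hs) as [Hs'|<-]; destruct (Rle_lt_or_eq_dec 0 t Ht) as [Ht'|<-].
  - left. split; auto. exists s, t; auto.
  - right; left. assert (E' : p = pscale s (asrc a)) by (rewrite E; pt_ring).
    rewrite E' in Hp |- *. rewrite (unit_scale_eq1 s (asrc a)); auto. pt_ring.
  - right; right. assert (E' : p = pscale t (adst a)) by (rewrite E; pt_ring).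
    rewrite E' in Hp |- *. rewrite (unit_scale_eq1 t (adst a)); auto. pt_ring.
  - exfalso. apply (sphere_neq0 p Hp). rewrite E. pt_ring.
Qed.

Lemma diagram_point_relint (D : list arc) (a : arc) (p : pt) : SD D -> In a D -> on_arc a p ->
  exists b, In b D /\ in_relint b p.
Proof.
  intros [_ [Hwf [_ Hbl]]] Ha Hp.
  destruct (on_arc_cases a p (Hwf a Ha) Hp) as [H|H]; [exists a; auto | apply (Hbl a p Ha H)].
Qed.

(* Otherwise the part of [a] next to [e] would lie in the relative interior of [b] as well. *)
Lemma blocking_arc_transversal (D : list arc) (a b : arc) (e o : pt) : SD D -> In a D -> In b D ->
  arc_ends a e o -> in_relint b e -> ~ on_great_circle_of b o.
Proof.
  intros [_ [Hwf [Hdis _]]] Ha Hb Heo Hrb Ho.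
  assert (Hab : a <> b).
  { intros <-. apply (endpoint_not_relint a e (Hwf a Ha)); auto. eapply arc_ends_endpoint; eauto. }
  destruct (great_circle_span b o (Hwf b Hb) Ho) as [al [be Eo]].
  destruct Hrb as [He [s1 [t1 [Hs1 [Ht1 Ee]]]]].
  set (d := Rmin s1 t1 / (2 * (Rabs al + Rabs be + 1))).
  pose proof (Rabs_pos al); pose proof (Rabs_pos be).
  pose proof (Rmin_l s1 t1); pose proof (Rmin_r s1 t1).
  assert (0 < Rmin s1 t1) by (apply Rmin_glb_lt; auto).
  assert (Hd : 0 < d) by (apply Rdiv_lt_0_compat; lra).
  assert (Hdd : d * (2 * (Rabs al + Rabs be + 1)) = Rmin s1 t1) by (unfold d; field; lra).
  clearbody d.
  pose proof (Rle_abs (- al)); pose proof (Rle_abs (- be)). rewrite Rabs_Ropp in *.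
  assert (C1 : 0 < s1 + d * al) by nra. assert (C2 : 0 < t1 + d * be) by nra.
  apply (Hdis a b (normalize (lincomb 1 e d o)) Ha Hb Hab).
  - apply relint_normalize; auto; lra.
  - replace (lincomb 1 e d o) with (lincomb (s1 + d * al) (asrc b) (t1 + d * be) (adst b))
      by (rewrite Ee, Eo; pt_ring).
    apply relint_normalize; auto. left; auto.
Qed.

Lemma lincomb_unit_parallel_eq (e o p q : pt) (sp tp sq tq : R) :
  0 <= sp -> 0 <= tp -> 0 <= sq -> 0 <= tq ->
  p = lincomb sp e tp o -> q = lincomb sq e tq o -> on_sphere p -> on_sphere q ->
  sp * tq - tp * sq = 0 -> p = q.
Proof.
  intros Hsp Htp Hsq Htq Ep Eq Sp Sq Hd.
  assert (Par : forall a b, 0 <= a -> 0 < b -> pscale b p = pscale a q -> p = q).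
  { intros a b Ha Hb E. assert (Ep' : p = pscale (a / b) q).
    { replace p with (pscale (/ b) (pscale b p)) by (pt_field; lra).
      rewrite E. pt_field; lra. }
    assert (0 <= a / b) by (apply Rmult_le_pos; [|left; apply Rinv_0_lt_compat]; auto).
    rewrite Ep' in Sp |- *. rewrite (unit_scale_eq1 (a / b) q); auto. pt_ring. }
  assert (E1 : pscale sq p = padd (pscale sp q) (pscale (tp * sq - sp * tq) o))
    by (rewrite Ep, Eq; pt_ring).
  assert (E2 : pscale tq p = padd (pscale tp q) (pscale (sp * tq - tp * sq) e))
    by (rewrite Ep, Eq; pt_ring).
  destruct (Rle_lt_or_eq_dec 0 sq Hsq) as [Hs|Hs].
  - apply (Par sp sq Hsp Hs). rewrite E1. replace (tp * sq - sp * tq) with 0 by lra. pt_ring.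
  - destruct (Rle_lt_or_eq_dec 0 tq Htq) as [Ht|Ht].
    + apply (Par tp tq Htp Ht). rewrite E2, Hd. pt_ring.
    + exfalso. apply (sphere_neq0 q Sq). rewrite Eq, <- Hs, <- Ht. pt_ring.
Qed.

(* Cramer's rule in the plane spanned by [e] and [o]: [q] is a positive combination of [p] and [r]
   as soon as it lies strictly between them. *)
Lemma between_interior (A : list pt) (c e o : pt) (sp tp sq tq sr tr : R) :
  (forall a, In a A -> on_sphere a) -> (forall x, sph_hull A x -> dot c x > 0) ->
  sph_interior (sph_hull A) (lincomb sp e tp o) -> sph_closure (sph_hull A) (lincomb sr e tr o) ->
  on_sphere (lincomb sq e tq o) -> 0 < dot c (lincomb sq e tq o) ->
  sp * tq - tp * sq > 0 -> sq * tr - tq * sr > 0 ->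
  sph_interior (sph_hull A) (lincomb sq e tq o).
Proof.
  intros HU Hc Hp Hr Hq cq Hpq Hqr.
  set (p := lincomb sp e tp o) in *. set (q := lincomb sq e tq o) in *. set (r := lincomb sr e tr o) in *.
  assert (E : pscale (sp * tr - tp * sr) q = lincomb (sq * tr - tq * sr) p (sp * tq - tp * sq) r)
    by (unfold p, q, r; pt_ring).
  assert (cp : 0 < dot c p) by (apply Rgt_lt, Hc, interior_in; auto).
  assert (cr : 0 < dot c r) by (apply (closure_dot_pos A); auto).
  assert (Hk : 0 < sp * tr - tp * sr).
  { apply (f_equal (dot c)) in E. rewrite dot_scaler, dot_lincombr in E.
    assert (0 < (sq * tr - tq * sr) * dot c p) by (apply Rmult_lt_0_compat; lra).
    assert (0 < (sp * tq - tp * sq) * dot c r) by (apply Rmult_lt_0_compat; lra).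
    apply Rmult_lt_reg_r with (dot c q); lra. }
  apply (interior_positive_comb A p r q (sq * tr - tq * sr) (sp * tq - tp * sq) (sp * tr - tp * sr));
    auto; lra.
Qed.

(* The conclusion says that, seen from the interior point [e], [y] lies beyond [z]. *)
Lemma arc_closure_side (A : list pt) (c e o z y : pt) (s0 t0 s1 t1 : R) :
  (forall a, In a A -> on_sphere a) -> (forall x, sph_hull A x -> dot c x > 0) ->
  sph_interior (sph_hull A) e -> z = lincomb s0 e t0 o -> y = lincomb s1 e t1 o ->
  0 <= s0 -> 0 <= t0 -> 0 <= s1 -> 0 <= t1 ->
  sph_interior (sph_hull A) z -> sph_closure (sph_hull A) y -> ~ sph_interior (sph_hull A) y ->
  s0 * t1 - t0 * s1 > 0.
Proof.
  intros HU Hc Hie Ez Ey Hs0 Ht0 Hs1 Ht1 Hiz Cy Ny.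
  pose proof Cy as [Sy _]. pose proof Hiz as [Sz _].
  assert (cy : 0 < dot c y) by (apply (closure_dot_pos A); auto).
  destruct (Rtotal_order (s0 * t1 - t0 * s1) 0) as [Hd|[Hd|Hd]]; auto; exfalso; apply Ny.
  - destruct (Rle_lt_or_eq_dec 0 t1 Ht1) as [Ht1'|Ht1'].
    + rewrite Ey in *. replace e with (lincomb 1 e 0 o) in Hie by pt_ring. rewrite Ez in Hiz.
      apply (between_interior A c e o 1 0 s1 t1 s0 t0); auto using interior_closure; lra.
    + assert (E : y = pscale s1 e) by (rewrite Ey, <- Ht1'; pt_ring).
      assert (Se : on_sphere e) by (destruct Hie; auto).
      rewrite E in Sy |- *. rewrite (unit_scale_eq1 s1 e Hs1 Se Sy). replace (pscale 1 e) with e by pt_ring.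
      auto.
  - replace y with z; auto. apply (lincomb_unit_parallel_eq e o z y s0 t0 s1 t1); auto.
Qed.

(** * Attractors *)

Section Attractor.

Variables (D : list arc) (k : nat) (P : list pt) (f : arc -> pt) (A : list pt) (c : pt).
Hypothesis HD : SD D.
Hypothesis Hor : oriented D k P f.
Hypothesis Hat : attractor k P A.
Hypothesis Hc : forall p, sph_hull A p -> dot c p > 0.

(* [x |-> x or -x, whichever is a pole] maps the [k] attractor points injectively into the [k]
   poles, hence onto them. *)
Lemma attractor_pole (a : arc) : In a D -> exists w, In w A /\ (w = f a \/ w = popp (f a)).
Proof.
  intros Ha. destruct Hor as [HlP [_ [_ [_ Hf]]]], Hat as [HlA [HnA [HinA HaA]]].
  set (phi := fun x => if excluded_middle_informative (In x P) then x else popp x).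
  assert (Hinc : incl (map phi A) P).
  { intros y Hy. apply in_map_iff in Hy as [x [<- Hx]]. unfold phi.
    destruct (excluded_middle_informative (In x P)); auto. destruct (HinA x Hx); tauto. }
  assert (Hnd : NoDup (map phi A)).
  { apply NoDup_map_NoDup_ForallPairs; auto. intros x y Hx Hy E. unfold phi in E.
    destruct (excluded_middle_informative (In x P)), (excluded_middle_informative (In y P)); auto.
    - exfalso. apply (HaA x y Hx Hy). unfold antipodal. rewrite E, popp_involutive; auto.
    - exfalso. apply (HaA y x Hy Hx). unfold antipodal. rewrite <- E, popp_involutive; auto.
    - rewrite <- (popp_involutive x), E, popp_involutive; auto. }
  assert (Hl : (length P <= length (map phi A))%nat) by (rewrite length_map; lia).
  destruct (Hf a Ha) as [HfP _]. apply (NoDup_length_incl Hnd Hl Hinc) in HfP.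
  apply in_map_iff in HfP as [w [Ew Hw]]. exists w. split; auto. unfold phi in Ew.
  destruct (excluded_middle_informative (In w P)); auto.
  right. rewrite <- Ew, popp_involutive; auto.
Qed.

Lemma attractor_on_sphere (a : pt) : In a A -> on_sphere a.
Proof.
  intros Ha. destruct Hor as [_ [_ [HuP _]]], Hat as [_ [_ [HinA _]]].
  destruct (HinA a Ha); [auto|]. rewrite <- (popp_involutive a). apply sphere_popp; auto.
Qed.

Lemma attractor_in_hull (a : pt) : In a A -> sph_hull A a.
Proof. intros Ha. split; [apply attractor_on_sphere | apply cone_generator]; auto. Qed.

(* The pole or anti-pole [w] of [a] lying in [A] is on the great circle of [a] but off [a]: writing
   [w = al u + be v] and [q = s0 u + t0 v], one of [u], [v] is a positive combination of [q]
   and [w]. *)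
Lemma arc_interior_endpoint (a : arc) (q : pt) : In a D -> on_arc a q ->
  sph_interior (sph_hull A) q -> exists e o, arc_ends a e o /\ sph_interior (sph_hull A) e.
Proof.
  intros Ha Hq Hiq. pose proof HD as [_ [Hwf _]]. assert (Hw : arc_wf a) by auto.
  destruct (on_arc_cases a q Hw Hq) as [Hrq|Hend].
  2:{ destruct (endpoint_arc_ends a q Hend) as [o Heo]. eauto. }
  destruct (attractor_pole a Ha) as [w [HwA Hpole]].
  assert (HwH : sph_hull A w) by (apply attractor_in_hull; auto).
  assert (Hws : on_sphere w) by (destruct HwH; auto).
  destruct Hor as [_ [_ [_ [_ Hf]]]]. destruct (Hf a Ha) as [_ [Hgc [Hn1 Hn2]]].
  assert (Hnw : ~ on_arc a w) by (destruct Hpole as [->| ->]; auto).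
  assert (Hgw : on_great_circle_of a w).
  { unfold on_great_circle_of in *. destruct Hpole as [->| ->]; auto. rewrite dot_oppr, Hgc; ring. }
  destruct (great_circle_span a w Hw Hgw) as [al [be Ew]].
  destruct Hrq as [Sq [s0 [t0 [Hs0 [Ht0 Eq]]]]].
  assert (Hcl : sph_closure (sph_hull A) w) by (apply sph_closure_refl; auto).
  assert (cw : 0 < dot c w) by (apply Rgt_lt, Hc; auto).
  assert (cq : 0 < dot c q) by (apply Rgt_lt, Hc, interior_in; auto).
  assert (Hneg : al < 0 \/ be < 0).
  { destruct (Rlt_le_dec al 0); auto. destruct (Rlt_le_dec be 0); auto. exfalso. apply Hnw.
    split; auto. exists al, be; auto. }
  set (d := s0 * be - al * t0).
  destruct (Rtotal_order d 0) as [Hd|[Hd|Hd]].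
  - assert (be < 0) by (destruct Hneg; [unfold d in Hd; nra | auto]).
    exists (asrc a), (adst a). split; [left; auto|].
    apply (interior_positive_comb A q w (asrc a) (- be) t0 (- d)); auto; try apply Hw; try nra.
    rewrite Eq, Ew. unfold d. pt_ring.
  - exfalso. assert (E : pscale s0 w = padd (pscale al q) (pscale d (adst a)))
      by (rewrite Ew, Eq; unfold d; pt_ring).
    apply (f_equal (dot c)) in E. rewrite dot_addr, !dot_scaler, Hd in E.
    assert (0 < al) by nra. unfold d in Hd. destruct Hneg; nra.
  - assert (al < 0) by (destruct Hneg; [auto | unfold d in Hd; nra]).
    exists (adst a), (asrc a). split; [right; auto|].
    apply (interior_positive_comb A q w (adst a) (- al) s0 d); auto; try apply Hw; try nra.
    rewrite Eq, Ew. unfold d. pt_ring.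
Qed.

(* Seen from an interior endpoint [e], every non-interior closure point of [b] lies beyond the
   interior point [z]; of two such points, the nearer would lie between [z] and the farther. *)
Lemma thrust_point_unique (b : arc) (y y' : pt) : In b D ->
  thrusts b (sph_hull A) y -> thrusts b (sph_hull A) y' -> y = y'.
Proof.
  intros Hb [Hy [HBy [z [Hz Hiz]]]] [Hy' [HBy' _]].
  pose proof (attractor_on_sphere) as HU.
  destruct (arc_interior_endpoint b z Hb Hz Hiz) as [e [o [Heo Hie]]].
  destruct (arc_ends_coords b e o z Heo Hz) as [s0 [t0 [Hs0 [Ht0 Ez]]]].
  destruct (arc_ends_coords b e o y Heo Hy) as [s1 [t1 [Hs1 [Ht1 Ey]]]].
  destruct (arc_ends_coords b e o y' Heo Hy') as [s2 [t2 [Hs2 [Ht2 Ey']]]].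
  pose proof (boundary_closure _ _ HBy) as Cy. pose proof (boundary_closure _ _ HBy') as Cy'.
  pose proof (boundary_not_interior _ _ HBy) as Ny. pose proof (boundary_not_interior _ _ HBy') as Ny'.
  pose proof (arc_closure_side A c e o z y s0 t0 s1 t1 HU Hc Hie Ez Ey Hs0 Ht0 Hs1 Ht1 Hiz Cy Ny).
  pose proof (arc_closure_side A c e o z y' s0 t0 s2 t2 HU Hc Hie Ez Ey' Hs0 Ht0 Hs2 Ht2 Hiz Cy' Ny').
  assert (cy : 0 < dot c y) by (apply (closure_dot_pos A); auto).
  assert (cy' : 0 < dot c y') by (apply (closure_dot_pos A); auto).
  subst z y y'. pose proof Cy as [Sy _]. pose proof Cy' as [Sy' _].
  destruct (Rtotal_order (s1 * t2 - t1 * s2) 0) as [Hd|[Hd|Hd]].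
  - exfalso. apply Ny'. apply (between_interior A c e o s0 t0 s2 t2 s1 t1); auto; lra.
  - apply (lincomb_unit_parallel_eq e o _ _ s1 t1 s2 t2); auto.
  - exfalso. apply Ny. apply (between_interior A c e o s0 t0 s1 t1 s2 t2); auto; lra.
Qed.

End Attractor.

(** * The walk *)

(* [level n c z = n.z / c.z] is the linear functional [n] read in the central projection onto
   the plane [c.z = 1], where arcs become segments. *)
Definition level (n c z : pt) : R := dot n z / dot c z.

Definition level_lt (n m c z1 z2 : pt) : Prop :=
  level n c z1 < level n c z2 \/ (level n c z1 = level n c z2 /\ level m c z1 < level m c z2).

Lemma level_lt_trans (n m c x y z : pt) : level_lt n m c x y -> level_lt n m c y z -> level_lt n m c x z.
Proof. unfold level_lt; lra. Qed.

Lemma level_lt_asym (n m c x y : pt) : level_lt n m c x y -> ~ level_lt n m c y x.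
Proof. unfold level_lt; lra. Qed.

Lemma level_lt_le (n m c x y : pt) : level_lt n m c x y -> level n c x <= level n c y.
Proof. unfold level_lt; lra. Qed.

Definition level_slope (n c e o : pt) : R := dot n e * dot c o - dot n o * dot c e.

Lemma level_diff (n c e o : pt) (s1 t1 s2 t2 : R) :
  0 < dot c (lincomb s1 e t1 o) -> 0 < dot c (lincomb s2 e t2 o) ->
  level n c (lincomb s2 e t2 o) - level n c (lincomb s1 e t1 o) =
  (s2 * t1 - t2 * s1) * level_slope n c e o / (dot c (lincomb s1 e t1 o) * dot c (lincomb s2 e t2 o)).
Proof.
  intros H1 H2. unfold level. field_simplify_eq; try lra.
  unfold level_slope. rewrite !dot_lincombr. ring.
Qed.

Definition rising (n m c e o : pt) : Prop :=
  level_slope n c e o > 0 \/ (level_slope n c e o = 0 /\ level_slope m c e o > 0).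

Lemma rising_orientation (n m c u v : pt) : level_slope m c u v <> 0 ->
  rising n m c u v \/ rising n m c v u.
Proof.
  unfold rising, level_slope. intros H.
  destruct (Rtotal_order (dot n u * dot c v - dot n v * dot c u) 0) as [|[|]];
  [right; left; lra | | left; left; lra].
  destruct (Rtotal_order (dot m u * dot c v - dot m v * dot c u) 0) as [|[|]];
  [right; right; lra | contradiction | left; right; lra].
Qed.

Lemma rising_level_lt (n m c e o z1 z2 : pt) (s1 t1 s2 t2 : R) : rising n m c e o ->
  z1 = lincomb s1 e t1 o -> z2 = lincomb s2 e t2 o -> 0 < dot c z1 -> 0 < dot c z2 ->
  s2 * t1 - t2 * s1 > 0 -> level_lt n m c z1 z2.
Proof.
  intros Hr -> -> H1 H2 Hd.
  pose proof (level_diff n c e o s1 t1 s2 t2 H1 H2) as Dn.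
  pose proof (level_diff m c e o s1 t1 s2 t2 H1 H2) as Dm.
  assert (P : 0 < dot c (lincomb s1 e t1 o) * dot c (lincomb s2 e t2 o)) by nra.
  unfold level_lt. destruct Hr as [Hr|[Hr0 Hr]].
  - left. assert (0 < (s2 * t1 - t2 * s1) * level_slope n c e o /
                    (dot c (lincomb s1 e t1 o) * dot c (lincomb s2 e t2 o)))
      by (apply Rdiv_lt_0_compat; nra). lra.
  - right. rewrite Hr0, Rmult_0_r, Rdiv_0_l in Dn. split; [lra|].
    assert (0 < (s2 * t1 - t2 * s1) * level_slope m c e o /
                (dot c (lincomb s1 e t1 o) * dot c (lincomb s2 e t2 o)))
      by (apply Rdiv_lt_0_compat; nra). lra.
Qed.

Lemma rising_not_level_lt (n m c e o z1 z2 : pt) (s1 t1 s2 t2 : R) : rising n m c e o ->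
  z1 = lincomb s1 e t1 o -> z2 = lincomb s2 e t2 o -> 0 < dot c z1 -> 0 < dot c z2 ->
  s2 * t1 - t2 * s1 >= 0 -> ~ level_lt n m c z2 z1.
Proof.
  intros Hr E1 E2 H1 H2 [Hd|Hd]; [apply level_lt_asym; eapply rising_level_lt; eauto|].
  subst z1 z2. pose proof (level_diff n c e o s1 t1 s2 t2 H1 H2) as Dn.
  pose proof (level_diff m c e o s1 t1 s2 t2 H1 H2) as Dm.
  rewrite Hd, !Rmult_0_l, Rdiv_0_l in Dn, Dm. unfold level_lt. lra.
Qed.

Definition holdsb (X : Type) (Q : X -> Prop) (a : X) : bool :=
  if excluded_middle_informative (Q a) then true else false.

Lemma holdsb_spec (X : Type) (Q : X -> Prop) (a : X) : holdsb X Q a = true <-> Q a.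
Proof. unfold holdsb. destruct (excluded_middle_informative (Q a)); split; auto; discriminate. Qed.

Lemma filter_holdsb_length_le {X : Type} (l : list X) (P Q : X -> Prop) :
  (forall a, In a l -> P a -> Q a) ->
  (length (filter (holdsb X P) l) <= length (filter (holdsb X Q) l))%nat.
Proof.
  induction l as [|a l IH]; simpl; intros H; auto.
  specialize (IH (fun b Hb => H b (or_intror Hb))).
  destruct (holdsb X P a) eqn:EP, (holdsb X Q a) eqn:EQ; simpl; try lia.
  apply (holdsb_spec X P a), H, (holdsb_spec X Q a) in EP; [congruence | auto].
Qed.

Lemma filter_holdsb_length_lt {X : Type} (l : list X) (P Q : X -> Prop) :
  (forall a, In a l -> P a -> Q a) -> (exists a, In a l /\ Q a /\ ~ P a) ->
  (length (filter (holdsb X P) l) < length (filter (holdsb X Q) l))%nat.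
Proof.
  induction l as [|a l IH]; simpl; intros H [b [Hb [HQ HP]]]; [contradiction|].
  pose proof (filter_holdsb_length_le l P Q (fun b Hb => H b (or_intror Hb))).
  destruct Hb as [->|Hb].
  - rewrite (proj2 (holdsb_spec X Q b) HQ).
    destruct (holdsb X P b) eqn:EP; [apply (holdsb_spec X P b) in EP; contradiction | simpl; lia].
  - specialize (IH (fun b Hb => H b (or_intror Hb)) (ex_intro _ b (conj Hb (conj HQ HP)))).
    destruct (holdsb X P a) eqn:EP, (holdsb X Q a) eqn:EQ; simpl; try lia.
    apply (holdsb_spec X P a), H, (holdsb_spec X Q a) in EP; [congruence | auto].
Qed.

Section Walk.

Variables (D : list arc) (A : list pt) (c m n : pt).
Hypothesis HD : SD D.
Hypothesis HU : forall a, In a A -> on_sphere a.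
Hypothesis Hc : forall p, sph_hull A p -> dot c p > 0.
Hypothesis Hm : forall a, In a D -> (exists z, on_arc a z /\ sph_interior (sph_hull A) z) ->
  level_slope m c (asrc a) (adst a) <> 0.

Definition arc_above (q : pt) (a : arc) : Prop :=
  exists z, on_arc a z /\ sph_interior (sph_hull A) z /\ level_lt n m c q z.

Definition arcs_above (q : pt) : nat := length (filter (holdsb arc (arc_above q)) D).

Definition thrust_above (q : pt) : Prop :=
  exists b y, In b D /\ thrusts b (sph_hull A) y /\ lip_connected D (sph_hull A) q y /\
    level_lt n m c q y.

Lemma rising_ends (b : arc) (q : pt) : In b D -> on_arc b q -> sph_interior (sph_hull A) q ->
  exists e o, arc_ends b e o /\ rising n m c e o.
Proof.
  intros Hb Hq Hi. destruct (rising_orientation n m c (asrc b) (adst b)) as [R|R]; eauto.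
  - exists (asrc b), (adst b). split; [left|]; auto.
  - exists (adst b), (asrc b). split; [right|]; auto.
Qed.

Lemma walk_exit (b : arc) (q e o : pt) : In b D -> in_relint b q -> sph_interior (sph_hull A) q ->
  arc_ends b e o -> rising n m c e o -> ~ sph_interior (sph_hull A) e -> thrust_above q.
Proof.
  intros Hb Hrq Hiq Heo Hr Hne. pose proof HD as [_ [Hwf _]].
  destruct (arc_ends_relint_coords b e o q Heo Hrq) as [s0 [t0 [Hs0 [Ht0 Eq]]]].
  destruct (arc_ends_on_arc b e o (Hwf b Hb) Heo) as [He_on _].
  assert (Hq_on : on_arc b q) by (apply relint_on_arc; auto).
  assert (Sq : on_sphere q) by (destruct Hq_on; auto). assert (Se : on_sphere e) by (destruct He_on; auto).
  assert (Hk : -1 < dot q e) by (apply (relint_dot_end_gtm1 b q e o); auto).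
  destruct (arc_exit _ q e Sq Se Hk Hiq Hne) as [T [HT [Hby Hin]]].
  set (w := lincomb (1 - T) q T e) in *.
  assert (Hwp : 0 < dot w w) by (apply lincomb_sqr_pos; auto; lra).
  exists b, (normalize w). split; auto. split; [|split].
  - split; [apply on_arc_normalize_lincomb; auto; lra|]. split; eauto.
  - apply lip_connected_along_arc with b; auto.
  - assert (cy : 0 < dot c (normalize w)) by (apply (closure_dot_pos A); auto using boundary_closure).
    assert (cq : 0 < dot c q) by (apply Rgt_lt, Hc, interior_in; auto).
    set (N := pnorm w) in *. assert (HN : 0 < N) by (apply pnorm_pos; auto).
    apply (rising_level_lt n m c e o q _ s0 t0 (/ N * ((1 - T) * s0 + T)) (/ N * ((1 - T) * t0)));
      auto.
    + unfold normalize. fold N. unfold w. rewrite Eq. pt_ring.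
    + replace (/ N * ((1 - T) * s0 + T) * t0 - / N * ((1 - T) * t0) * s0) with (/ N * (T * t0))
        by ring.
      apply Rmult_lt_0_compat; [apply Rinv_0_lt_compat | apply Rmult_lt_0_compat]; lra.
Qed.

(* No point of [b] lies above its rising endpoint [e], while [b] itself was counted at [q]. *)
Lemma walk_to_endpoint (b : arc) (q e o : pt) : In b D -> in_relint b q ->
  sph_interior (sph_hull A) q -> arc_ends b e o -> rising n m c e o -> sph_interior (sph_hull A) e ->
  level_lt n m c q e /\ lip_connected D (sph_hull A) q e /\ (arcs_above e < arcs_above q)%nat.
Proof.
  intros Hb Hrq Hiq Heo Hr Hie. pose proof HD as [_ [Hwf _]].
  destruct (arc_ends_relint_coords b e o q Heo Hrq) as [s0 [t0 [Hs0 [Ht0 Eq]]]].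
  destruct (arc_ends_on_arc b e o (Hwf b Hb) Heo) as [He_on _].
  assert (ce : 0 < dot c e) by (apply Rgt_lt, Hc, interior_in; auto).
  assert (cq : 0 < dot c q) by (apply Rgt_lt, Hc, interior_in; auto).
  assert (Ee : e = lincomb 1 e 0 o) by pt_ring.
  assert (Kqe : level_lt n m c q e) by (apply (rising_level_lt n m c e o q e s0 t0 1 0); auto; lra).
  split; [auto | split].
  - apply lip_connected_along_arc_end with b; auto using relint_on_arc.
    + apply (relint_dot_end_gtm1 b q e o); auto.
    + intros tau Htau. apply interior_lincomb_closure; auto using interior_closure; try lra.
      apply lincomb_sqr_pos; [destruct Hiq | destruct Hie | apply (relint_dot_end_gtm1 b q e o) |];
        auto; lra.
  - apply filter_holdsb_length_lt.
    + intros a _ [z [Hz1 [Hz2 Hz3]]]. exists z. split; auto. split; auto. eapply level_lt_trans; eauto.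
    + exists b. split; auto. split; [exists e; auto|].
      intros [z [Hz1 [Hz2 Hz3]]].
      destruct (arc_ends_coords b e o z Heo Hz1) as [s [t [Hs [Ht Ez]]]].
      assert (cz : 0 < dot c z) by (apply Rgt_lt, Hc, interior_in; auto).
      revert Hz3. apply (rising_not_level_lt n m c e o z e s t 1 0); auto. lra.
Qed.

Lemma walk (q : pt) : sph_interior (sph_hull A) q -> (exists a, In a D /\ on_arc a q) ->
  thrust_above q.
Proof.
  remember (S (arcs_above q)) as N. assert (HN : (arcs_above q < N)%nat) by lia. clear HeqN.
  revert q HN. induction N as [|N IH]; intros q HN Hi [a [Ha Hq]]; [lia|].
  destruct (diagram_point_relint D a q HD Ha Hq) as [b [Hb Hrq]].
  destruct (rising_ends b q Hb (relint_on_arc b q Hrq) Hi) as [e [o [Heo Hr]]].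
  destruct (classic (sph_interior (sph_hull A) e)) as [Hie|Hne]; [|eapply walk_exit; eauto].
  destruct (walk_to_endpoint b q e o Hb Hrq Hi Heo Hr Hie) as [Kqe [Lqe Hlt]].
  pose proof HD as [_ [Hwf _]].
  destruct (IH e) as [b' [y [Hb' [Ht [Hl Hk]]]]]; [lia | auto | exists b; split; auto|].
  - apply (arc_ends_on_arc b e o); auto.
  - exists b', y. split; [auto|]. split; [auto|].
    split; [apply lip_connected_trans with e; auto | eapply level_lt_trans; eauto].
Qed.

End Walk.

(* A direction avoiding finitely many planes: perturb along the first offending normal [W0] by
   more than every ratio [|m.W| / |W0.W|]. *)
Lemma generic_direction (Ws : list pt) :
  exists m, forall W, In W Ws -> W <> pzero -> dot m W <> 0.
Proof.
  induction Ws as [|W0 Ws [m Hm]]; [exists pzero; intros W []|].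
  destruct (classic (W0 <> pzero /\ dot m W0 = 0)) as [[HW0 Hz]|Hok].
  2:{ exists m. intros W [<-|HW] Hnz; auto. }
  destruct (finite_upper_bound (fun W => Rabs (dot m W) / Rabs (dot W0 W)) Ws) as [M [HM HMb]].
  exists (padd m (pscale (M + 1) W0)). intros W [<-|HW] Hnz; rewrite dot_addl, dot_scalel.
  - rewrite Hz. pose proof (dot_self_pos W0 Hnz). nra.
  - pose proof (Hm W HW Hnz). destruct (Req_dec (dot W0 W) 0) as [E|E]; [rewrite E; lra|].
    pose proof (HMb W HW) as Hb. cbv beta in Hb.
    assert (Hp : 0 < Rabs (dot W0 W)) by (apply Rabs_pos_lt; auto).
    assert (Rabs (dot m W) < (M + 1) * Rabs (dot W0 W)).
    { apply Rmult_le_compat_r with (r := Rabs (dot W0 W)) in Hb; [|lra].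
      unfold Rdiv in Hb. rewrite Rmult_assoc, Rinv_l, Rmult_1_r in Hb by lra. nra. }
    intro C. replace (dot m W) with (- ((M + 1) * dot W0 W)) in H0 by lra.
    rewrite Rabs_Ropp, Rabs_mult, (Rabs_right (M + 1)) in H0 by lra. lra.
Qed.

Lemma generic_slope (D : list arc) (A : list pt) (c : pt) :
  (forall a, In a D -> arc_wf a) -> (forall p, sph_hull A p -> dot c p > 0) ->
  exists m, forall a, In a D -> (exists z, on_arc a z /\ sph_interior (sph_hull A) z) ->
    level_slope m c (asrc a) (adst a) <> 0.
Proof.
  intros Hwf Hc.
  set (W := fun a => lincomb (dot c (adst a)) (asrc a) (- dot c (asrc a)) (adst a)).
  destruct (generic_direction (map W D)) as [m Hm]. exists m.
  intros a Ha [z [[Sz [s [t [Hs [Ht Ez]]]]] Hi]].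
  replace (level_slope m c (asrc a) (adst a)) with (dot m (W a))
    by (unfold W, level_slope; rewrite dot_lincombr; ring).
  apply Hm; [apply in_map; auto|]. intro E.
  apply arc_endpoints_independent in E as [E1 E2]; auto.
  assert (cz : 0 < dot c z) by (apply Rgt_lt, Hc, interior_in; auto).
  rewrite Ez, dot_addr, !dot_scaler in cz. nra.
Qed.

Lemma arc_initial_interior (A : list pt) (p e : pt) : on_sphere p -> on_sphere e -> -1 < dot p e ->
  sph_interior (sph_hull A) p -> exists T, 0 < T <= 1 /\
    forall tau, 0 < tau < T -> sph_interior (sph_hull A) (normalize (lincomb (1 - tau) p tau e)).
Proof.
  intros Sp Se Hk Hi. destruct (classic (sph_interior (sph_hull A) e)) as [Hie|Hnie].
  - exists 1. split; [lra|]. intros tau Ht.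
    apply interior_lincomb_closure; auto using interior_closure; try lra.
    apply lincomb_sqr_pos; auto; lra.
  - destruct (arc_exit _ p e Sp Se Hk Hi Hnie) as [T [HT [_ Hin]]]. eauto.
Qed.

Lemma move_off_plane (D : list arc) (A : list pt) (N : pt) (b : arc) (p e o : pt) : SD D -> In b D ->
  in_relint b p -> arc_ends b e o -> sph_interior (sph_hull A) p -> dot N p = 0 -> dot N e <> 0 ->
  exists x', sph_interior (sph_hull A) x' /\ (exists a, In a D /\ on_arc a x') /\
    lip_connected D (sph_hull A) p x' /\ dot N x' <> 0.
Proof.
  intros [_ [Hwf _]] Hb Hr Heo Hi Hp He.
  assert (Hpb : on_arc b p) by (apply relint_on_arc; auto).
  destruct (arc_ends_on_arc b e o (Hwf b Hb) Heo) as [Heb _].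
  assert (Hk : -1 < dot p e) by (apply (relint_dot_end_gtm1 b p e o); auto).
  assert (Sp : on_sphere p) by (destruct Hpb; auto). assert (Se : on_sphere e) by (destruct Heb; auto).
  destruct (arc_initial_interior A p e Sp Se Hk Hi) as [T [HT Hin]].
  assert (Hpos : 0 < dot (lincomb (1 - T / 2) p (T / 2) e) (lincomb (1 - T / 2) p (T / 2) e))
    by (apply lincomb_sqr_pos; auto; lra).
  exists (normalize (lincomb (1 - T / 2) p (T / 2) e)). split; [apply Hin; lra|].
  split; [exists b; split; [|apply on_arc_normalize_lincomb]; auto; lra|].
  split; [apply lip_connected_along_arc with b; auto; [lra | intros; apply Hin; lra]|].
  unfold normalize. rewrite dot_scaler, dot_lincombr, Hp.
  pose proof (pnorm_pos _ Hpos). assert (0 < / pnorm (lincomb (1 - T / 2) p (T / 2) e))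
    by (apply Rinv_0_lt_compat; auto).
  intro C. apply Rmult_integral in C as [C|C]; [lra|]. apply He. nra.
Qed.

(** * Three thrust points *)

Lemma separating_normal (x y : pt) : on_sphere x -> on_sphere y -> x <> y -> x <> popp y ->
  exists n, dot n x = 0 /\ dot n y < 0.
Proof.
  intros Sx Sy H1 H2. pose proof (unit_dot_lt1 x y Sx Sy H1). pose proof (unit_dot_gtm1 x y Sx Sy H2).
  exists (psub (pscale (dot x y) x) y). unfold on_sphere in Sx, Sy.
  rewrite !dot_subl, !dot_scalel, Sx, Sy, (dot_comm y x). split; nra.
Qed.

Lemma dot_pos_not_antipodal (c u v : pt) : 0 < dot c u -> 0 < dot c v -> u <> popp v.
Proof. intros Hu Hv ->. rewrite dot_oppr in Hu. lra. Qed.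

Section Thrusts.

Variables (D : list arc) (k : nat) (P : list pt) (f : arc -> pt) (A : list pt) (c : pt).
Hypothesis HD : SD D.
Hypothesis Hor : oriented D k P f.
Hypothesis Hat : attractor k P A.
Hypothesis Hc : forall p, sph_hull A p -> dot c p > 0.

Lemma thrust_dot_pos (b : arc) (y : pt) : thrusts b (sph_hull A) y -> 0 < dot c y.
Proof.
  intros [_ [HB _]]. apply (closure_dot_pos A); auto using boundary_closure.
  apply (attractor_on_sphere D k P f A); auto.
Qed.

Lemma thrust_in_halfspace (n q : pt) : sph_interior (sph_hull A) q ->
  (exists a, In a D /\ on_arc a q) -> 0 <= dot n q ->
  exists b y, In b D /\ thrusts b (sph_hull A) y /\ lip_connected D (sph_hull A) q y /\
    0 <= dot n y /\ (0 < dot n q -> 0 < dot n y).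
Proof.
  intros Hi Hq Hn. pose proof HD as [_ [Hwf _]].
  pose proof (attractor_on_sphere D k P f A Hor Hat) as HU.
  destruct (generic_slope D A c Hwf Hc) as [m Hm].
  destruct (walk D A c m n HD HU Hc Hm q Hi Hq) as [b [y [Hb [Ht [Hl Hlt]]]]].
  exists b, y. split; [auto | split; [auto | split; [auto|]]].
  apply level_lt_le in Hlt. unfold level in Hlt.
  assert (cq : 0 < dot c q) by (apply Rgt_lt, Hc, interior_in; auto).
  pose proof (thrust_dot_pos b y Ht) as cy.
  assert (0 <= dot n q / dot c q) by (apply Rmult_le_pos; [|left; apply Rinv_0_lt_compat]; auto).
  assert (E : dot n y = dot n y / dot c y * dot c y) by (field; lra).
  split; [rewrite E; apply Rmult_le_pos; lra|].
  intros Hnq. assert (0 < dot n q / dot c q) by (apply Rdiv_lt_0_compat; auto).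
  rewrite E. apply Rmult_lt_0_compat; lra.
Qed.

Lemma second_thrust (x y1 : pt) (b1 : arc) : sph_interior (sph_hull A) x ->
  (exists a, In a D /\ on_arc a x) -> thrusts b1 (sph_hull A) y1 ->
  exists b y, In b D /\ thrusts b (sph_hull A) y /\ lip_connected D (sph_hull A) x y /\ y <> y1.
Proof.
  intros Hi Hx Ht1. pose proof Ht1 as [[Sy1 _] [HB1 _]].
  assert (cx : 0 < dot c x) by (apply Rgt_lt, Hc, interior_in; auto).
  assert (Hxy1 : x <> y1) by (intros ->; apply (boundary_not_interior _ _ HB1 Hi)).
  assert (Hxy1' : x <> popp y1)
    by (apply (dot_pos_not_antipodal c); auto; apply (thrust_dot_pos b1); auto).
  destruct (separating_normal x y1) as [n [Hnx Hny]]; [destruct Hi; auto | auto | auto | auto |].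
  destruct (thrust_in_halfspace n x Hi Hx) as [b [y [Hb [Ht [Hl [Hny' _]]]]]]; [lra|].
  exists b, y. split; [auto | split; [auto | split; [auto|]]]. intros ->. lra.
Qed.

Lemma off_plane_point (N x : pt) : N <> pzero -> sph_interior (sph_hull A) x ->
  (exists a, In a D /\ on_arc a x) ->
  exists x', sph_interior (sph_hull A) x' /\ (exists a, In a D /\ on_arc a x') /\
    lip_connected D (sph_hull A) x x' /\ dot N x' <> 0.
Proof.
  intros HN Hix [a0 [Ha0 Hxa0]]. pose proof HD as [_ [Hwf [_ Hbl]]].
  destruct (diagram_point_relint D a0 x HD Ha0 Hxa0) as [b0 [Hb0 Hr0]].
  assert (Hxb0 : on_arc b0 x) by (apply relint_on_arc; auto).
  destruct (Req_dec (dot N x) 0) as [Nx|Nx].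
  2:{ exists x. split; [auto | split; [eauto | split; [apply lip_connected_refl with a0|]]]; auto. }
  destruct (Req_dec (dot N (asrc b0)) 0) as [Nu|Nu];
    [|apply (move_off_plane D A N b0 x (asrc b0) (adst b0)); auto; left; auto].
  destruct (Req_dec (dot N (adst b0)) 0) as [Nv|Nv];
    [|apply (move_off_plane D A N b0 x (adst b0) (asrc b0)); auto; right; auto].
  destruct (arc_interior_endpoint D k P f A c HD Hor Hat Hc b0 x Hb0 Hxb0 Hix) as [e [o [Heo Hie]]].
  assert (No : dot N o = 0) by (destruct Heo as [[-> ->]|[-> ->]]; auto).
  assert (Lxe : lip_connected D (sph_hull A) x e).
  { destruct (arc_ends_on_arc b0 e o (Hwf b0 Hb0) Heo) as [Heb _].
    assert (Hk : -1 < dot x e) by (apply (relint_dot_end_gtm1 b0 x e o); auto).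
    apply lip_connected_along_arc_end with b0; auto.
    intros tau Htau. apply interior_lincomb_closure; auto using interior_closure; try lra.
    apply lincomb_sqr_pos; [destruct Hix | destruct Heb | |]; auto; lra. }
  destruct (Hbl b0 e Hb0 (arc_ends_endpoint b0 e o Heo)) as [b2 [Hb2 Hr2]].
  assert (Ex2 : dot N (asrc b2) <> 0 \/ dot N (adst b2) <> 0).
  { apply NNPP. intro C. apply (blocking_arc_transversal D b0 b2 e o HD Hb0 Hb2 Heo Hr2).
    apply (triple_product_eq0 N); auto; apply NNPP; intro; apply C; auto. }
  assert (Ne : dot N e = 0) by (destruct Heo as [[-> ->]|[-> ->]]; auto).
  assert (Hmove : exists x', sph_interior (sph_hull A) x' /\ (exists a, In a D /\ on_arc a x') /\
                   lip_connected D (sph_hull A) e x' /\ dot N x' <> 0).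
  { destruct Ex2; [apply (move_off_plane D A N b2 e (asrc b2) (adst b2))
                  | apply (move_off_plane D A N b2 e (adst b2) (asrc b2))]; auto; [left|right]; auto. }
  destruct Hmove as [x' [H1 [H2 [H3 H4]]]]. exists x'.
  split; [auto | split; [auto | split; [apply lip_connected_trans with e | ]]]; auto.
Qed.

Lemma thrust_off_plane (N x : pt) : N <> pzero -> sph_interior (sph_hull A) x ->
  (exists a, In a D /\ on_arc a x) ->
  exists b y, In b D /\ thrusts b (sph_hull A) y /\ lip_connected D (sph_hull A) x y /\ dot N y <> 0.
Proof.
  intros HN Hix Hx.
  destruct (off_plane_point N x HN Hix Hx) as [x' [Hix' [Hx' [Lxx' Nx']]]].
  set (n := if Rlt_dec 0 (dot N x') then N else popp N).
  assert (Hn : 0 < dot n x') by (unfold n; destruct (Rlt_dec 0 (dot N x')); rewrite ?dot_oppl; lra).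
  assert (HnN : forall z, 0 < dot n z -> dot N z <> 0)
    by (unfold n; destruct (Rlt_dec 0 (dot N x')); intros z; rewrite ?dot_oppl; lra).
  destruct (thrust_in_halfspace n x' Hix' Hx') as [b [y [Hb [Ht [Hl [_ Hny]]]]]]; [lra|].
  exists b, y. split; [auto | split; [auto | split]].
  - apply lip_connected_trans with x'; auto.
  - apply HnN, Hny; auto.
Qed.

End Thrusts.

Theorem mainTheorem18 :
  forall (D : list arc) (k : nat) (P : list pt) (f : arc -> pt) (A : list pt) (x : pt),
    SD D -> oriented D k P f -> attractor k P A ->
    ~ total (sph_hull A) ->
    in_open_hemisphere (sph_hull A) ->
    (exists a, In a D /\ on_arc a x) ->
    sph_interior (sph_hull A) x ->
    exists (a1 a2 a3 : arc) (y1 y2 y3 : pt),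
      In a1 D /\ In a2 D /\ In a3 D /\
      a1 <> a2 /\ a1 <> a3 /\ a2 <> a3 /\
      y1 <> y2 /\ y1 <> y3 /\ y2 <> y3 /\
      thrusts a1 (sph_hull A) y1 /\ thrusts a2 (sph_hull A) y2 /\
      thrusts a3 (sph_hull A) y3 /\
      ~ (exists n, edge_normal (sph_hull A) n /\
           on_edge (sph_hull A) n y1 /\ on_edge (sph_hull A) n y2 /\
           on_edge (sph_hull A) n y3) /\
      int_connected D (sph_hull A) x y1 /\
      int_connected D (sph_hull A) x y2 /\
      int_connected D (sph_hull A) x y3.
Proof.
  (* Non-totality is implied by the hemisphere hypothesis. *)
  intros D k P f A x HD Hor Hat _ [c Hc] Hx Hix.
  destruct (thrust_in_halfspace D k P f A c HD Hor Hat Hc pzero x Hix Hx)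
    as [b1 [y1 [Hb1 [Ht1 [L1 _]]]]]; [rewrite dot_zerol; lra|].
  destruct (second_thrust D k P f A c HD Hor Hat Hc x y1 b1 Hix Hx Ht1)
    as [b2 [y2 [Hb2 [Ht2 [L2 y21]]]]].
  pose proof (thrust_dot_pos D k P f A c Hor Hat Hc b1 y1 Ht1) as c1.
  pose proof (thrust_dot_pos D k P f A c Hor Hat Hc b2 y2 Ht2) as c2.
  assert (HN : cross y1 y2 <> pzero).
  { apply dot_self_pos_neq0, cross_unit_neq0; [destruct Ht1 as [[] _] | destruct Ht2 as [[] _] | |];
      auto; apply (dot_pos_not_antipodal c); auto. }
  destruct (thrust_off_plane D k P f A c HD Hor Hat Hc (cross y1 y2) x HN Hix Hx)
    as [b3 [y3 [Hb3 [Ht3 [L3 N3]]]]].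
  assert (y31 : y3 <> y1) by (intros ->; apply N3, dot_cross_l).
  assert (y32 : y3 <> y2) by (intros ->; apply N3, dot_cross_r).
  pose proof (thrust_point_unique D k P f A c HD Hor Hat Hc) as Uniq.
  exists b1, b2, b3, y1, y2, y3. do 3 (split; [auto|]).
  split; [intros <-; apply y21, (Uniq b1); auto|].
  split; [intros <-; apply y31, (Uniq b1); auto|].
  split; [intros <-; apply y32, (Uniq b2); auto|].
  do 6 (split; [auto|]).
  split; [|split; [|split]; apply lip_connected_int_connected; auto].
  intros [n [[Hn _] [[_ E1] [[_ E2] [_ E3]]]]]. apply N3, (triple_product_eq0 n); auto.
Qed.
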